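(* With the notation below, $\hat G=\hat N\alpha\hat B\sqcup\hat B$. Moreover, for $n_1,n_2\in\hat N$ one has $n_1\alpha\hat B\cap n_2\alpha\hat B\neq\varnothing$ if and only if $n_1\hat H=n_2\hat H$.
   Context: Let $F$ be a non-archimedean local field with ring of integers $\mathfrak{o}$, uniformizer $\varpi$, and finite residue field of cardinality $q$. $X=X_{PGL_2(F)}$ is the Bruhat–Tits tree of $PGL_2(F)$: vertices are homothety classes of $\mathfrak{o}$-lattices in $F^2$, with $[L],[L']$ adjacent iff there are representatives with $\varpi L\subsetneq L'\subsetneq L$; it is $(q+1)$-regular. $d$ is the path-length distance; $\mathrm{Aut}(X)$ is the group of distance-preserving bijections of the vertex set with the topology of pointwise convergence, and $PGL_2(F)\hookrightarrow\mathrm{Aut}(X)$ via the linear action on lattices. For an edge $\eta=\{y_1,y_2\}$ and $e\ge1$, $B(\eta,e)=\{y:\min(d(y,y_1),d(y,y_2))\le e\}$, and $\hat G=\hat G^{(e)}=\{g\in\mathrm{Aut}(X):\forall\eta\ \exists g'\in PGL_2(F),\ g|_{B(\eta,e)}=g'|_{B(\eta,e)}\}$ for a fixed $e\ge1$. Ends are equivalence classes of infinite paths (agreeing after an index shift from some point on). Fix a doubly infinite path $(x_n)_{n\in\mathbb{Z}}$; let $\omega$ be the end of $(x_n)_{n\ge0}$ and $\omega'$ the end of $(x_{-n})_{n\ge0}$. Set $\hat B=\{g\in\hat G: g(\omega)=\omega\}$, $\hat N=\{b\in\hat B: b(x_i)=x_i\text{ for some }i\in\mathbb{Z}\}$, $\hat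 H=\{n\in\hat N: n(x_k)=x_k\ \forall k\in\mathbb{Z}\}$. Fix $\alpha\in\hat G$ with $\alpha(x_n)=x_{-n}$ for all $n\in\mathbb{Z}$ (such $\alpha$ exists). *)

From HB Require Import structures.
From mathcomp Require Import all_boot all_order all_algebra.
Set Implicit Arguments. Unset Strict Implicit. Unset Printing Implicit Defensive.
Import Order.TTheory GRing.Theory Num.Theory.
Local Open Scope ring_scope.

Section LocalField.
Variables (F : fieldType) (v : F -> int).

(* "x has valuation >= k", with the convention v(0) = +infinity *)
Definition ge_val (x : F) (k : int) : Prop := x = 0 \/ k <= v x.

Definition in_o (x : F) : Prop := ge_val x 0.

Definition is_discrete_valuation : Prop :=
  [/\ (forall x y, x != 0 -> y != 0 -> v (x * y) = v x + v y),
      (forall x y, x != 0 -> y != 0 -> x + y != 0 ->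
          Num.min (v x) (v y) <= v (x + y)) &
      (forall k : int, exists2 x, x != 0 & v x = k)].

Definition is_complete : Prop :=
  forall u : nat -> F,
    (forall k : int, exists N : nat, forall m n, (N <= m)%N -> (N <= n)%N ->
        ge_val (u m - u n) k) ->
    exists l : F, forall k : int, exists N : nat, forall n, (N <= n)%N ->
        ge_val (u n - l) k.

(* the residue field o / varpi o is finite *)
Definition finite_residue_field : Prop :=
  exists s : seq F, (forall b, b \in s -> in_o b) /\
    forall a, in_o a -> exists2 b, b \in s & ge_val (a - b) 1.

Definition is_nonarch_local_field : Prop :=
  [/\ is_discrete_valuation, is_complete & finite_residue_field].

Definition vset := 'rV[F]_2 -> Prop.

Definition lattice_of (B : 'M[F]_2) : vset :=
  fun x => exists c : 'rV[F]_2, (forall i, in_o (c 0 i)) /\ x = c *m B.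

Definition is_lattice (L : vset) : Prop :=
  exists2 B : 'M[F]_2, B \in unitmx & L = lattice_of B.

Definition scale_set (c : F) (L : vset) : vset :=
  fun x => exists2 y, L y & x = c *: y.

(* homothety class of lattices = vertex of the Bruhat-Tits tree *)
Definition is_vertex (V : vset -> Prop) : Prop :=
  exists2 L0, is_lattice L0 &
    forall L, V L <-> exists2 c : F, c != 0 & L = scale_set c L0.

Definition Vertex := {V : vset -> Prop | is_vertex V}.

Definition subset_strict (A B : vset) : Prop :=
  (forall x, A x -> B x) /\ exists2 x, B x & ~ A x.

(* adjacency, for a fixed uniformizer varpi *)
Definition adj (varpi : F) (y z : Vertex) : Prop :=
  exists L, exists L', proj1_sig y L /\ proj1_sig z L' /\
    subset_strict (scale_set varpi L) L' /\ subset_strict L' L.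

Inductive walk (varpi : F) : Vertex -> Vertex -> nat -> Prop :=
  | walk0 y : walk varpi y y 0
  | walkS y z w n : adj varpi y z -> walk varpi z w n -> walk varpi y w n.+1.

Definition dist_le (varpi : F) (y z : Vertex) (n : nat) : Prop :=
  exists2 m, (m <= n)%N & walk varpi y z m.

Definition isAut (varpi : F) (g : Vertex -> Vertex) : Prop :=
  bijective g /\
  forall y z n, dist_le varpi (g y) (g z) n <-> dist_le varpi y z n.

Definition img (M : 'M[F]_2) (L : vset) : vset :=
  fun x => exists2 y, L y & x = y *m M.

(* the element of PGL_2(F) represented by M sends vertex y to vertex z *)
Definition acts_as (M : 'M[F]_2) (y z : Vertex) : Prop :=
  forall L', proj1_sig z L' <-> exists2 L, proj1_sig y L & L' = img M L.

Definition in_ball (varpi : F) (y1 y2 : Vertex) (e : nat) (y : Vertex) : Prop :=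
  dist_le varpi y1 y e \/ dist_le varpi y2 y e.

Definition inGhat (varpi : F) (e : nat) (g : Vertex -> Vertex) : Prop :=
  isAut varpi g /\
  forall y1 y2, adj varpi y1 y2 ->
    exists2 M : 'M[F]_2, M \in unitmx &
      forall y, in_ball varpi y1 y2 e y -> acts_as M y (g y).

Definition is_biinf_path (varpi : F) (x : int -> Vertex) : Prop :=
  (forall n : int, adj varpi (x n) (x (n + 1))) /\
  (forall n : int, x (n + 1) <> x (n - 1)).

(* g fixes the end omega of (x_n)_{n >= 0} *)
Definition fixes_end (x : int -> Vertex) (g : Vertex -> Vertex) : Prop :=
  exists k N : int, forall n : int, 0 <= n -> N <= n -> g (x n) = x (n + k).

Definition inBhat varpi e x g : Prop := inGhat varpi e g /\ fixes_end x g.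
Definition inNhat varpi e x g : Prop :=
  inBhat varpi e x g /\ exists i : int, g (x i) = x i.
Definition inHhat varpi e x g : Prop :=
  inNhat varpi e x g /\ forall k : int, g (x k) = x k.

End LocalField.

From HB Require Import structures.
From mathcomp Require Import all_boot all_order all_algebra.
From mathcomp Require Import ring zify.
From Stdlib Require Import Classical ClassicalEpsilon FunctionalExtensionality PropExtensionality ProofIrrelevance.
Import Order.TTheory GRing.Theory Num.Theory.
Set Implicit Arguments. Unset Strict Implicit. Unset Printing Implicit Defensive.
Local Open Scope ring_scope.

(* Vertices are handled through matrix representatives: an invertible B
   represents the homothety class of the o-lattice spanned by its rows, and two
   representatives of one vertex differ by a scalar times an element of GL_2(o).
     This yields a lower bound on d([B], [B']) in terms of B' B^-1.
   - Apartments: by completeness of F, every doubly infinite path is of the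
     form x_j = [diag(varpi^j, 1) P]; on it d(x_a, x_b) = |a - b| and geodesics
     between points of the path stay on the path.
   - Groups: G^ is closed under composition and inverses and contains PGL_2(F);
     an element of N^ fixes a ray towards omega; alpha swaps the two ends.
   - The theorem: B^ and N^ alpha B^ are disjoint because alpha moves omega;
     the coset rule follows from geodesic uniqueness; and for g in G^, writing
     g(x_j) = [diag(varpi^j, 1) R P], either R is upper triangular (g in B^) or
     an upper unipotent n in N^ makes alpha^-1 n^-1 g fix omega. *)

Ltac field_nz := field; repeat (apply/andP; split); try done.

Section Mat.
Variable F : fieldType.

Definition mk2 (a b c d : F) : 'M[F]_2 :=
  \matrix_(i < 2, j < 2) (if nat_of_ord i == 0%N then (if nat_of_ord j == 0%N then a else b)
                          else (if nat_of_ord j == 0%N then c else d)).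

Lemma mk2E (M : 'M[F]_2) : M = mk2 (M 0 0) (M 0 1) (M 1 0) (M 1 1).
Proof.
apply/matrixP => i j; rewrite mxE.
case: i => [[|[|i]] Hi]; case: j => [[|[|j]] Hj] //=;
  by congr (M _ _); apply: val_inj.
Qed.

Lemma mk2_00 a b c d : mk2 a b c d 0 0 = a. Proof. by rewrite mxE. Qed.
Lemma mk2_01 a b c d : mk2 a b c d 0 1 = b. Proof. by rewrite mxE. Qed.
Lemma mk2_10 a b c d : mk2 a b c d 1 0 = c. Proof. by rewrite mxE. Qed.
Lemma mk2_11 a b c d : mk2 a b c d 1 1 = d. Proof. by rewrite mxE. Qed.

Lemma mk2_mul a b c d a' b' c' d' :
  mk2 a b c d *m mk2 a' b' c' d' =
  mk2 (a*a'+b*c') (a*b'+b*d') (c*a'+d*c') (c*b'+d*d').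
Proof.
apply/matrixP => i j; rewrite !mxE !big_ord_recl big_ord0 !mxE /=.
case: i => [[|[|i]] Hi]; case: j => [[|[|j]] Hj] //=; by rewrite addr0.
Qed.

Lemma mk2_det a b c d : \det (mk2 a b c d) = a * d - b * c.
Proof.
rewrite (expand_det_row _ 0) !big_ord_recl big_ord0 /cofactor !mxE /=.
rewrite !det_mx11 !mxE /=.
rewrite /bump /=. rewrite !expr0 !expr1 !mul1r addr0. ring.
Qed.

Lemma mk2_scale k a b c d : k *: mk2 a b c d = mk2 (k*a) (k*b) (k*c) (k*d).
Proof.
apply/matrixP => i j; rewrite !mxE.
by case: i => [[|[|i]] Hi]; case: j => [[|[|j]] Hj].
Qed.

Lemma mk2_one : (1%:M : 'M[F]_2) = mk2 1 0 0 1.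
Proof.
apply/matrixP => i j; rewrite !mxE.
by case: i => [[|[|i]] Hi]; case: j => [[|[|j]] Hj].
Qed.

Lemma mk2_add a b c d a' b' c' d' :
  mk2 a b c d + mk2 a' b' c' d' = mk2 (a+a') (b+b') (c+c') (d+d').
Proof.
apply/matrixP => i j; rewrite !mxE.
by case: i => [[|[|i]] Hi]; case: j => [[|[|j]] Hj].
Qed.

Lemma mk2_opp a b c d : - mk2 a b c d = mk2 (-a) (-b) (-c) (-d).
Proof.
apply/matrixP => i j; rewrite !mxE.
by case: i => [[|[|i]] Hi]; case: j => [[|[|j]] Hj].
Qed.

Lemma mk2_unit a b c d : (mk2 a b c d \in unitmx) = (a * d - b * c != 0).
Proof. by rewrite unitmxE mk2_det unitfE. Qed.

Lemma mk2_inv a b c d : a * d - b * c != 0 ->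
  invmx (mk2 a b c d) =
  mk2 (d / (a*d-b*c)) (- b / (a*d-b*c)) (- c / (a*d-b*c)) (a / (a*d-b*c)).
Proof.
move=> h.
have hu : mk2 a b c d \in unitmx by rewrite mk2_unit.
have hm : mk2 a b c d *m mk2 (d / (a*d-b*c)) (- b / (a*d-b*c)) (- c / (a*d-b*c)) (a / (a*d-b*c)) = 1%:M.
  rewrite mk2_mul mk2_one; congr mk2; field; exact h.
by rewrite -[invmx _]mulmx1 -hm mulmxA mulVmx // mul1mx.
Qed.

Definition rv2 (x y : F) : 'rV[F]_2 := \row_(j < 2) (if nat_of_ord j == 0%N then x else y).

Lemma rv2E (r : 'rV[F]_2) : r = rv2 (r 0 0) (r 0 1).
Proof.
apply/matrixP => i j; rewrite mxE.
rewrite (ord1 i).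
case: j => [[|[|j]] Hj] //=; by congr (r _ _); apply: val_inj.
Qed.

Lemma rv2_mul x y a b c d : rv2 x y *m mk2 a b c d = rv2 (x*a + y*c) (x*b + y*d).
Proof.
apply/matrixP => i j; rewrite !mxE !big_ord_recl big_ord0 !mxE /=.
case: j => [[|[|j]] Hj] //=; by rewrite addr0.
Qed.

End Mat.

Section Val.
Variables (F : fieldType) (v : F -> int).
Hypothesis hv : is_discrete_valuation v.

Lemma vM x y : x != 0 -> y != 0 -> v (x * y) = v x + v y.
Proof. by case: hv => h _ _; apply: h. Qed.

Lemma vD x y : x != 0 -> y != 0 -> x + y != 0 -> Num.min (v x) (v y) <= v (x + y).
Proof. by case: hv => _ h _; apply: h. Qed.

Lemma v1 : v 1 = 0.
Proof. have := vM (oner_neq0 F) (oner_neq0 F); rewrite mulr1 => h; set z := v 1 in h *; lia. Qed.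

Lemma vV x : x != 0 -> v (x^-1) = - v x.
Proof.
move=> h; have := vM h (invr_neq0 h); rewrite mulfV // v1; lia.
Qed.

Lemma vN1 : v (-1) = 0.
Proof.
have h : (-1 : F) != 0 by rewrite oppr_eq0 oner_neq0.
have := vM h h; rewrite mulrNN mulr1 v1 => h'; set z := v (-1) in h' *; lia.
Qed.

Lemma vN x : v (- x) = v x.
Proof.
case: (eqVneq x 0) => [->|h]; first by rewrite oppr0.
have h1 : (-1 : F) != 0 by rewrite oppr_eq0 oner_neq0.
by rewrite -mulN1r vM // vN1 add0r.
Qed.

Lemma vdiv x y : x != 0 -> y != 0 -> v (x / y) = v x - v y.
Proof. by move=> hx hy; rewrite vM ?invr_neq0 // vV. Qed.

Lemma gv0 k : ge_val v 0 k. Proof. by left. Qed.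

Lemma gvE x k : x != 0 -> ge_val v x k <-> k <= v x.
Proof. by move=> h; split => [[/eqP e|//]|]; [rewrite e in h | right]. Qed.

Lemma gv_le_v x k : x != 0 -> ge_val v x k -> k <= v x.
Proof. by move=> nx /(gvE _ nx). Qed.

Lemma gv_v x : ge_val v x (v x). Proof. by right. Qed.

Lemma gv_le x a b : ge_val v x a -> b <= a -> ge_val v x b.
Proof. by move=> [->|h] hb; [left|right; lia]. Qed.

Lemma gvN x k : ge_val v (- x) k <-> ge_val v x k.
Proof.
split => -[h|h].
- by left; apply/eqP; rewrite -oppr_eq0 h.
- by right; rewrite -vN.
- by left; rewrite h oppr0.
- by right; rewrite vN.
Qed.

Lemma gvD x y k : ge_val v x k -> ge_val v y k -> ge_val v (x + y) k.
Proof.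
move=> [->|hx]; first by rewrite add0r.
move=> [->|hy]; first by rewrite addr0; right.
case: (eqVneq x 0) => [->|nx]; first by rewrite add0r; right.
case: (eqVneq y 0) => [->|ny]; first by rewrite addr0; right.
case: (eqVneq (x + y) 0) => [->|nxy]; first by left.
right; have := vD nx ny nxy.
have : k <= Num.min (v x) (v y) by rewrite le_min hx hy.
exact: le_trans.
Qed.

Lemma gvB x y k : ge_val v x k -> ge_val v y k -> ge_val v (x - y) k.
Proof. by move=> hx hy; apply: gvD => //; apply/gvN. Qed.

Lemma gvM x y a b : ge_val v x a -> ge_val v y b -> ge_val v (x * y) (a + b).
Proof.
move=> [->|hx]; first by rewrite mul0r; left.
move=> [->|hy]; first by rewrite mulr0; left.
case: (eqVneq x 0) => [->|nx]; first by rewrite mul0r; left.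
case: (eqVneq y 0) => [->|ny]; first by rewrite mulr0; left.
right; rewrite vM //; lia.
Qed.

Lemma gv1 : ge_val v 1 0. Proof. by right; rewrite v1. Qed.

Lemma v_one_plus e : ge_val v e 1 -> 1 + e != 0 /\ v (1 + e) = 0.
Proof.
move=> he.
have h0 : ge_val v (1 + e) 0 by apply: gvD; [exact: gv1| exact: gv_le he _].
have ne : 1 + e != 0.
  apply/eqP => h. have ee : e = -1 by rewrite -(addKr 1 e) h addr0. move: he; rewrite ee => -[/eqP|]; rewrite ?oppr_eq0 ?oner_eq0 // vN1 //.
split => //.
case: h0 => [/eqP|h0]; first by rewrite (negbTE ne).
have : ~ (1 <= v (1 + e)).
  move=> h1.
  have : ge_val v ((1 + e) - e) 1 by apply: gvB; [right|].
  rewrite addrK => -[/eqP|]; rewrite ?oner_eq0 // v1 //.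
lia.
Qed.

Section Pow.
Variable (varpi : F).
Hypothesis (hvarpi0 : varpi != 0) (hvarpi : v varpi = 1).

Lemma v_varpiXn (n : nat) : v (varpi ^+ n) = n%:Z.
Proof.
elim: n => [|n ih]; first by rewrite expr0 v1.
rewrite exprS vM ?expf_neq0 // hvarpi ih; lia.
Qed.

Lemma v_varpiX (j : int) : v (varpi ^ j) = j.
Proof.
case: j => n; first by rewrite -exprnP v_varpiXn.
rewrite NegzE -invr_expz vV ?expfz_neq0 // -exprnP v_varpiXn; lia.
Qed.

Lemma varpiXD (i j : int) : varpi ^ (i + j) = varpi ^ i * varpi ^ j.
Proof. exact: expfzDr. Qed.

Lemma gv_varpiX (j : int) : ge_val v (varpi ^ j) j.
Proof. by right; rewrite v_varpiX. Qed.

End Pow.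

End Val.

Section Lat.
Variables (F : fieldType) (v : F -> int).
Hypothesis hv : is_discrete_valuation v.

Definition allge (M : 'M[F]_2) (k : int) := forall i j, ge_val v (M i j) k.
Notation inM M := (allge M 0).

Lemma allge_mk2 a b c d k :
  allge (mk2 a b c d) k <-> [/\ ge_val v a k, ge_val v b k, ge_val v c k & ge_val v d k].
Proof.
split.
- by move=> h; split; [have := h 0 0|have := h 0 1|have := h 1 0|have := h 1 1];
    rewrite ?mk2_00 ?mk2_01 ?mk2_10 ?mk2_11.
- case=> ha hb hc hd i j; rewrite mxE.
  by case: i => [[|[|i]] Hi]; case: j => [[|[|j]] Hj].
Qed.

Lemma allgeP (M : 'M[F]_2) k :
  allge M k <-> [/\ ge_val v (M 0 0) k, ge_val v (M 0 1) k, ge_val v (M 1 0) k & ge_val v (M 1 1) k].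
Proof. rewrite {1}[M]mk2E; exact: allge_mk2. Qed.

Lemma allge_le M a b : allge M a -> b <= a -> allge M b.
Proof. by move=> h hb i j; apply: gv_le (h i j) hb. Qed.

Lemma allge_mul A B a b : allge A a -> allge B b -> allge (A *m B) (a + b).
Proof.
rewrite [A]mk2E [B]mk2E mk2_mul !allge_mk2 => -[h1 h2 h3 h4] [g1 g2 g3 g4].
by split; apply: (gvD hv); apply: (gvM hv).
Qed.

Lemma allge_scale c A a b : ge_val v c a -> allge A b -> allge (c *: A) (a + b).
Proof.
rewrite [A]mk2E mk2_scale !allge_mk2 => hc [h1 h2 h3 h4].
by split; apply: (gvM hv).
Qed.

Lemma allge_add A B k : allge A k -> allge B k -> allge (A + B) k.
Proof. by move=> ha hb i j; rewrite mxE; apply: gvD. Qed.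

Lemma allge_opp A k : allge A k -> allge (- A) k.
Proof. by move=> ha i j; rewrite mxE; apply/gvN. Qed.

Lemma allge_1 : allge 1%:M 0.
Proof. by rewrite mk2_one allge_mk2; split; first [exact: gv1 | exact: gv0]. Qed.

Lemma inM_mul A B : inM A -> inM B -> inM (A *m B).
Proof. by move=> ha hb; have := allge_mul ha hb; rewrite addr0. Qed.

Lemma det_ge A k : allge A k -> ge_val v (\det A) (k + k).
Proof.
rewrite [A]mk2E allge_mk2 mk2_det => -[h1 h2 h3 h4].
by apply: (gvB hv) => //; apply: (gvM hv).
Qed.

Lemma invmxM (A B : 'M[F]_2) : A \in unitmx -> B \in unitmx ->
  invmx (A *m B) = invmx B *m invmx A.
Proof.
move=> ua ub; have u : A *m B \in unitmx by rewrite unitmx_mul ua ub.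
have e : (A *m B) *m (invmx B *m invmx A) = 1%:M.
  by rewrite -mulmxA (mulmxA B) mulmxV // mul1mx mulmxV.
by rewrite -[invmx (A *m B)]mulmx1 -e mulmxA mulVmx // mul1mx.
Qed.

Definition GL2o (U : 'M[F]_2) := [/\ U \in unitmx, inM U & inM (invmx U)].

Lemma GL2o_1 : GL2o 1%:M.
Proof. by split; rewrite ?unitmx1 ?invmx1 //; exact: allge_1. Qed.

Lemma GL2o_mul U V : GL2o U -> GL2o V -> GL2o (U *m V).
Proof.
move=> [u1 u2 u3] [w1 w2 w3]; split.
- by rewrite unitmx_mul u1 w1.
- exact: inM_mul.
- by rewrite invmxM //; apply: inM_mul.
Qed.

Lemma GL2o_inv U : GL2o U -> GL2o (invmx U).
Proof. by move=> [u1 u2 u3]; split; rewrite ?unitmx_inv ?invmxK. Qed.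

Lemma GL2o_det U : GL2o U -> \det U != 0 /\ v (\det U) = 0.
Proof.
move=> [u1 u2 u3].
have nz : \det U != 0 by rewrite -unitfE -unitmxE.
have nz' : \det (invmx U) != 0 by rewrite -unitfE -unitmxE unitmx_inv.
have e : \det U * \det (invmx U) = 1 by rewrite -det_mulmx mulmxV // det1.
have g1 := det_ge u2; have g2 := det_ge u3.
move: g1 g2; rewrite (gvE v _ nz) (gvE v _ nz') => g1 g2.
have := vM hv nz nz'; rewrite e v1 // => h.
split => //. move: g1 g2 h; set a := v (\det U); set b := v _. lia.
Qed.

Lemma GL2o_of_det U : inM U -> \det U != 0 -> v (\det U) = 0 -> GL2o U.
Proof.
rewrite [U]mk2E mk2_det => hu nz h0.
have hu' := hu; move: hu'; rewrite allge_mk2 => -[h1 h2 h3 h4].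
have gi : ge_val v ((U 0 0 * U 1 1 - U 0 1 * U 1 0)^-1) 0.
  by right; rewrite vV // h0.
split.
- by rewrite mk2_unit.
- exact: hu.
- rewrite mk2_inv // allge_mk2; split; rewrite -[(0:int)]addr0; apply: (gvM hv) => //; apply/gvN => //.
Qed.

Lemma vset_ext (L1 L2 : vset F) : (forall x, L1 x <-> L2 x) -> L1 = L2.
Proof.
move=> h; apply: functional_extensionality => x; apply: propositional_extensionality; exact: h.
Qed.

Lemma rowge (c : 'rV[F]_2) (M : 'M[F]_2) :
  (forall i, in_o v (c 0 i)) -> inM M -> forall i, in_o v ((c *m M) 0 i).
Proof.
move=> hc hM i.
have [h1 h2 h3 h4] := (allgeP M 0).1 hM.
have hc0 := hc 0; have hc1 := hc 1.
rewrite [c]rv2E [M]mk2E rv2_mul.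
rewrite /in_o mxE; case: i => [[|[|i]] Hi] //=;
  rewrite -[(0:int)]addr0; apply: (gvD hv); rewrite -[(0:int)]addr0; apply: (gvM hv) => //.
Qed.

Lemma lat_subM (T B : 'M[F]_2) x : inM T -> lattice_of v (T *m B) x -> lattice_of v B x.
Proof.
move=> hT [c [hc ->]]; exists (c *m T); split; last by rewrite mulmxA.
exact: rowge.
Qed.

Lemma lat_sub_inM (B B' : 'M[F]_2) : B' \in unitmx ->
  (forall x, lattice_of v B x -> lattice_of v B' x) -> inM (B *m invmx B').
Proof.
move=> u h.
have key : forall r : 'rV[F]_2, (forall i, in_o v (r 0 i)) -> forall i, in_o v ((r *m (B *m invmx B')) 0 i).
  move=> r hr; have [c [hc e]] : lattice_of v B' (r *m B) by apply: h; exists r.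
  by rewrite mulmxA e mulmxK.
rewrite allgeP.
have k0 := key (rv2 1 0); have k1 := key (rv2 0 1).
have o1 : in_o v (1:F) by exact: gv1.
have o0 : in_o v (0:F) by exact: gv0.
have hr0 : forall i, in_o v (rv2 1 0 0 i) by move=> i; rewrite mxE; case: (nat_of_ord i == 0%N).
have hr1 : forall i, in_o v (rv2 0 1 0 i) by move=> i; rewrite mxE; case: (nat_of_ord i == 0%N).
move: (k0 hr0) (k1 hr1); rewrite [B *m invmx B']mk2E !rv2_mul => g0 g1.
have := g0 0; have := g0 1; have := g1 0; have := g1 1.
rewrite !mxE /= !mul1r !mul0r !addr0 !add0r => a b c d; split; assumption.
Qed.

Lemma lat_GL U B : GL2o U -> lattice_of v (U *m B) = lattice_of v B.
Proof.
move=> [u1 u2 u3]; apply: vset_ext => x; split; first exact: lat_subM.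
move=> h; apply: (@lat_subM (invmx U)) => //; by rewrite mulmxA mulVmx // mul1mx.
Qed.

Lemma lat_scale c B : scale_set c (lattice_of v B) = lattice_of v (c *: B).
Proof.
apply: vset_ext => x; split.
- by move=> [y [d [hd ->]] ->]; exists d; split => //; rewrite scalemxAr.
- by move=> [d [hd ->]]; exists (d *m B); [exists d|rewrite scalemxAr].
Qed.

Lemma img_lat M B : img M (lattice_of v B) = lattice_of v (B *m M).
Proof.
apply: vset_ext => x; split.
- by move=> [y [d [hd ->]] ->]; exists d; rewrite mulmxA.
- by move=> [d [hd ->]]; exists (d *m B); [exists d|rewrite mulmxA].
Qed.

Lemma lat_eq_GL B B' : B \in unitmx -> B' \in unitmx ->
  lattice_of v B = lattice_of v B' -> GL2o (B *m invmx B').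
Proof.
move=> u u' e; split.
- by rewrite unitmx_mul u unitmx_inv.
- by apply: lat_sub_inM => // x; rewrite e.
- rewrite invmxM ?unitmx_inv // invmxK; by apply: lat_sub_inM => // x; rewrite e.
Qed.

End Lat.
Notation inM v M := (allge v M 0).

Section Vert.
Variables (F : fieldType) (v : F -> int).
Hypothesis hv : is_discrete_valuation v.
Local Notation V := (Vertex v).

Definition rep (y : V) (B : 'M[F]_2) := B \in unitmx /\ proj1_sig y (lattice_of v B).

Lemma scale1 (L : vset F) : scale_set 1 L = L.
Proof.
apply: vset_ext => x; split; first by move=> [y hy ->]; rewrite scale1r.
by move=> h; exists x; rewrite ?scale1r.
Qed.

Lemma rep_class y B : rep y B -> forall L, proj1_sig y L <-> exists2 c : F, c != 0 & L = lattice_of v (c *: B).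
Proof.
case: y => Y [L0 [B0 uB0 eL0] hY] /= [uB hB] L.
have [c1 nc1 e1] := (hY _).1 hB.
rewrite eL0 lat_scale in e1.
split.
- move=> /(hY _) [c nc ->]; exists (c / c1); first by rewrite mulf_neq0 ?invr_neq0.
  by rewrite -lat_scale e1 lat_scale eL0 lat_scale scalerA divfK.
- move=> [c nc ->]; apply/(hY _); exists (c * c1); first by rewrite mulf_neq0.
  by rewrite eL0 lat_scale -lat_scale e1 lat_scale scalerA.
Qed.

Lemma rep_exists (y : V) : exists B, rep y B.
Proof.
case: y => Y [L0 [B0 uB0 eL0] hY]; exists B0; split => //=.
apply/(hY _); exists 1; first exact: oner_neq0.
by rewrite scale1.
Qed.

Lemma rep_rel y B B' : rep y B -> rep y B' ->
  exists c U, [/\ c != 0, GL2o v U & B' = c *: (U *m B)].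
Proof.
move=> hB [uB' hB']; have [c nc e] := (rep_class hB _).1 hB'.
have ucB : c *: B \in unitmx.
  by rewrite unitmxZ ?unitfE // ; case: hB.
exists c, (B' *m invmx (c *: B)); split => //.
- by apply: lat_eq_GL.
- by rewrite scalemxAr mulmxKV.
Qed.

Lemma rep_GL y B c U : rep y B -> c != 0 -> GL2o v U -> rep y (c *: (U *m B)).
Proof.
move=> hB nc hU; have [uB _] := hB; have [uU _ _] := hU.
split; first by rewrite unitmxZ ?unitfE // unitmx_mul uU uB.
apply/(rep_class hB); exists c => //.
by rewrite -lat_scale lat_GL // lat_scale.
Qed.

Lemma rep_scale y B c : rep y B -> c != 0 -> rep y (c *: B).
Proof.
move=> hB nc; have := rep_GL hB nc (@GL2o_1 _ _ hv); by rewrite mul1mx.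
Qed.

Lemma vert_ext (y z : V) : (forall L, proj1_sig y L <-> proj1_sig z L) -> y = z.
Proof.
case: y => Y hY; case: z => Z hZ /= h.
have e : Y = Z.
  apply: functional_extensionality => L; apply: propositional_extensionality; exact: h.
subst Z; f_equal; apply: proof_irrelevance.
Qed.

Lemma vert_eq y z B : rep y B -> rep z B -> y = z.
Proof.
move=> hy hz; apply: vert_ext => L.
by rewrite (rep_class hy) (rep_class hz).
Qed.

Lemma vert_eq_GL2o y z B c U : rep y B -> rep z (c *: (U *m B)) -> c != 0 -> GL2o v U -> y = z.
Proof. by move=> hy hz nc hU; apply: (vert_eq _ hz); apply: rep_GL. Qed.

Definition homothety_class (L0 : vset F) : vset F -> Prop :=
  fun L => exists2 c : F, c != 0 & L = scale_set c L0.

Definition unit_or_1 (B : 'M[F]_2) := if B \in unitmx then B else 1%:M.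

Lemma unit_or_1_unit B : unit_or_1 B \in unitmx.
Proof. by rewrite /unit_or_1; case: ifP => // _; rewrite unitmx1. Qed.

Lemma is_vertex_homothety_class B : is_vertex v (homothety_class (lattice_of v (unit_or_1 B))).
Proof.
exists (lattice_of v (unit_or_1 B)); last by [].
by exists (unit_or_1 B); [exact: unit_or_1_unit|].
Qed.

(* The vertex [B] of an invertible matrix B (made total by using 1 otherwise). *)
Definition vertex_of (B : 'M[F]_2) : V := exist _ _ (is_vertex_homothety_class B).

Lemma rep_vertex_of B : B \in unitmx -> rep (vertex_of B) B.
Proof.
move=> uB; split => //=; rewrite /unit_or_1 uB.
by exists 1; [exact: oner_neq0| rewrite scale1].
Qed.

Definition some_rep (y : V) : 'M[F]_2 := proj1_sig (constructive_indefinite_description _ (rep_exists y)).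
Lemma some_rep_spec y : rep y (some_rep y).
Proof. exact: proj2_sig (constructive_indefinite_description _ (rep_exists y)). Qed.

Lemma img_comp A B (L : vset F) : img B (img A L) = img (A *m B) L.
Proof.
apply: vset_ext => x; split.
- by move=> [y [z hz ->] ->]; exists z; rewrite ?mulmxA.
- by move=> [z hz ->]; exists (z *m A); [exists z|rewrite mulmxA].
Qed.

Lemma img1 (L : vset F) : img 1%:M L = L.
Proof.
apply: vset_ext => x; split; first by move=> [y hy ->]; rewrite mulmx1.
by move=> h; exists x; rewrite ?mulmx1.
Qed.

Lemma img_scale M c (L : vset F) : img M (scale_set c L) = scale_set c (img M L).
Proof.
apply: vset_ext => x; split.
- by move=> [y [z hz ->] ->]; exists (z *m M); [exists z|rewrite scalemxAl].
- by move=> [y [z hz ->] ->]; exists (c *: z); [exists z|rewrite scalemxAl].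
Qed.

Definition act (M : 'M[F]_2) (y : V) : V := vertex_of (some_rep y *m M).

Lemma rep_act (M : 'M[F]_2) (y : V) : M \in unitmx -> rep (act M y) (some_rep y *m M).
Proof.
move=> uM; apply: rep_vertex_of; rewrite unitmx_mul uM andbT; by case: (some_rep_spec y).
Qed.

Lemma acts_as_rep (M : 'M[F]_2) (y z : V) B : acts_as M y z -> rep y B -> M \in unitmx -> rep z (B *m M).
Proof.
move=> h [uB hB] uM; split; first by rewrite unitmx_mul uB uM.
by apply/h; exists (lattice_of v B) => //; rewrite img_lat.
Qed.

Lemma acts_as_of_rep (M : 'M[F]_2) (y z : V) B : rep y B -> rep z (B *m M) -> acts_as M y z.
Proof.
move=> hy hz L'; rewrite (rep_class hz); split.
- move=> [c nc ->]; exists (lattice_of v (c *: B)); first by apply/(rep_class hy); exists c.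
  by rewrite img_lat scalemxAl.
- move=> [L /(rep_class hy) [c nc ->] ->]; exists c => //.
  by rewrite img_lat scalemxAl.
Qed.

Lemma acts_as_act (M : 'M[F]_2) (y : V) : M \in unitmx -> acts_as M y (act M y).
Proof. move=> uM; apply: acts_as_of_rep (some_rep_spec y) (rep_act y uM). Qed.

Lemma acts_as_uniq (M : 'M[F]_2) (y z z' : V) : acts_as M y z -> acts_as M y z' -> z = z'.
Proof. by move=> h h'; apply: vert_ext => L; rewrite h h'. Qed.

Lemma acts_as_comp (A B : 'M[F]_2) (y z u : V) : acts_as A y z -> acts_as B z u -> acts_as (A *m B) y u.
Proof.
move=> h1 h2 L''; rewrite h2; split.
- move=> [L' /h1 [L hL ->] ->]; exists L => //; by rewrite img_comp.
- move=> [L hL ->]; exists (img A L); first by apply/h1; exists L.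
  by rewrite img_comp.
Qed.

Lemma acts_as_inv (M : 'M[F]_2) (y z : V) : M \in unitmx -> acts_as M y z -> acts_as (invmx M) z y.
Proof.
move=> uM h L; split.
- move=> hL; exists (img M L); first by apply/h; exists L.
  by rewrite img_comp mulmxV // img1.
- move=> [L' /h [L0 hL0 ->] ->]; by rewrite img_comp mulmxV // img1.
Qed.

Lemma acts_as_1 (y : V) : acts_as 1%:M y y.
Proof.
move=> L; split; first by move=> h; exists L; rewrite ?img1.
by move=> [L0 h ->]; rewrite img1.
Qed.

End Vert.

(* Normal forms, modulo GL_2(o) on the left, of integral matrices whose
   determinant has valuation 1 (the transition matrices between neighbours). *)
Section Hermite.
Variables (F : fieldType) (v : F -> int).
Hypothesis hv : is_discrete_valuation v.
Variable (varpi : F).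
Hypotheses (hvarpi0 : varpi != 0) (hvarpi : v varpi = 1).

Lemma GL2o_mk2 a b c d : ge_val v a 0 -> ge_val v b 0 -> ge_val v c 0 -> ge_val v d 0 ->
  a * d - b * c != 0 -> v (a * d - b * c) = 0 -> GL2o v (mk2 a b c d).
Proof.
move=> ha hb hc hd nz h0; apply: GL2o_of_det => //; rewrite ?mk2_det //.
by rewrite allge_mk2.
Qed.

Lemma GL2o_swap : GL2o v (mk2 0 1 1 0).
Proof.
apply: GL2o_mk2; try exact: gv0; try exact: (gv1 hv).
- by rewrite mul0r sub0r mulr1 oppr_eq0 oner_eq0.
- by rewrite mul0r sub0r mulr1 (vN hv) (v1 hv).
Qed.

Lemma GL2o_upper t : ge_val v t 0 -> GL2o v (mk2 1 t 0 1).
Proof.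
move=> ht; apply: GL2o_mk2; try exact: gv0; try exact: (gv1 hv);
  by rewrite ?mulr0 ?mulr1 ?subr0 ?oner_eq0 ?(v1 hv).
Qed.

Lemma GL2o_lower t : ge_val v t 0 -> GL2o v (mk2 1 0 t 1).
Proof.
move=> ht; apply: GL2o_mk2 => //; try exact: gv0; try exact: (gv1 hv);
  by rewrite ?mulr0 ?mul0r ?mulr1 ?subr0 ?oner_eq0 ?(v1 hv).
Qed.

Definition lower_normal (T : 'M[F]_2) : Prop :=
  exists U, GL2o v U /\
    ((exists al, ge_val v al 0 /\ T = U *m mk2 varpi 0 al 1) \/ T = U *m mk2 1 0 0 varpi).

Lemma lower_normal_GL2o V T : GL2o v V -> lower_normal T -> lower_normal (V *m T).
Proof.
move=> hV [U [hU H]]; exists (V *m U); split; first exact: (GL2o_mul hv).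
by case: H => [[al [hal ->]]|->]; [left; exists al; split|right]; rewrite ?mulmxA.
Qed.

Lemma triangular_lower_normal a c d : ge_val v a 0 -> ge_val v c 0 -> ge_val v d 0 ->
  a * d != 0 -> v (a * d) = 1 -> lower_normal (mk2 a 0 c d).
Proof.
move=> ha hc hd nad had.
have na : a != 0 by move: nad; rewrite mulf_eq0 negb_or => /andP[].
have nd : d != 0 by move: nad; rewrite mulf_eq0 negb_or => /andP[].
have va := gv_le_v na ha; have vd := gv_le_v nd hd.
rewrite vM // in had.
have [vd0|vd1] : v d = 0 \/ v d = 1 by lia.
- have na' : a / varpi != 0 by rewrite mulf_neq0 ?invr_neq0.
  exists (mk2 (a / varpi) 0 0 d); split.
  + apply: GL2o_mk2 => //; try exact: gv0.
    * by right; rewrite vdiv // hvarpi; lia.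
    * by rewrite ?mulr0 ?mul0r subr0 mulf_neq0.
    * by rewrite ?mulr0 ?mul0r subr0 vM // vdiv // hvarpi; lia.
  + left; exists (c / d); split.
    * case: (eqVneq c 0) => [->|nc]; first by rewrite mul0r; exact: gv0.
      by right; rewrite vdiv // vd0; move: (gv_le_v nc hc); lia.
    * rewrite mk2_mul; congr mk2; field_nz.
- exists (mk2 a 0 c (d / varpi)); split.
  + apply: GL2o_mk2 => //; try exact: gv0.
    * by right; rewrite vdiv // hvarpi; lia.
    * by rewrite ?mulr0 ?mul0r subr0 mulf_neq0 ?mulf_neq0 ?invr_neq0.
    * by rewrite ?mulr0 ?mul0r subr0 vM ?mulf_neq0 ?invr_neq0 // vdiv // hvarpi; lia.
  + right; rewrite mk2_mul; congr mk2; field_nz.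
Qed.

(* If v d <= v b, a column operation in o clears b. *)
Lemma column_lower_normal a b c d : ge_val v a 0 -> ge_val v b 0 -> ge_val v c 0 ->
  ge_val v d 0 -> a * d - b * c != 0 -> v (a * d - b * c) = 1 -> d != 0 ->
  ge_val v b (v d) -> lower_normal (mk2 a b c d).
Proof.
move=> ha hb hc hd nz v1' nd hbd.
have hq : ge_val v (b / d) 0.
  case: (eqVneq b 0) => [->|nb]; first by rewrite mul0r; exact: gv0.
  by right; rewrite vdiv //; move: hbd => /(gvE v _ nb); lia.
have -> : mk2 a b c d = mk2 1 (b / d) 0 1 *m mk2 (a - b / d * c) 0 c d.
  by rewrite mk2_mul; congr mk2; field_nz.
have ea : (a - b / d * c) * d = a * d - b * c by field.
apply: lower_normal_GL2o; first exact: GL2o_upper.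
apply: triangular_lower_normal; rewrite ?ea //.
by apply: (gvB hv) => //; rewrite -[(0:int)]addr0; exact: (gvM hv).
Qed.

Lemma lower_index_form T : inM v T -> \det T != 0 -> v (\det T) = 1 -> lower_normal T.
Proof.
rewrite [T]mk2E mk2_det allge_mk2.
set a := T 0 0; set b := T 0 1; set c := T 1 0; set d := T 1 1.
move=> [ha hb hc hd] nz vdt.
have swap : ge_val v d (v b) -> b != 0 -> lower_normal (mk2 a b c d).
  move=> hdb nb.
  have -> : mk2 a b c d = mk2 0 1 1 0 *m mk2 c d a b by rewrite mk2_mul; congr mk2; ring.
  have ed : c * b - d * a = - (a * d - b * c) by ring.
  apply: lower_normal_GL2o; first exact: GL2o_swap.
  by apply: column_lower_normal; rewrite ?ed ?oppr_eq0 ?(vN hv).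
case: (eqVneq d 0) => [d0|nd].
- have nb : b != 0 by apply: contra nz => /eqP ->; rewrite d0 mulr0 mul0r subr0.
  by apply: swap => //; rewrite d0; exact: gv0.
- case: (eqVneq b 0) => [b0|nb].
  + by apply: column_lower_normal => //; rewrite b0; exact: gv0.
  + have [hbd|hdb] : v d <= v b \/ v b < v d by lia.
    * by apply: column_lower_normal => //; right.
    * by apply: swap => //; right; lia.
Qed.

(* The transposed statement, obtained by conjugating with the permutation matrix. *)
Lemma upper_index_form T : inM v T -> \det T != 0 -> v (\det T) = 1 ->
  exists U, GL2o v U /\
    ((exists be, ge_val v be 0 /\ T = U *m mk2 1 be 0 varpi) \/ T = U *m mk2 varpi 0 0 1).
Proof.
rewrite [T]mk2E mk2_det allge_mk2.
set a := T 0 0; set b := T 0 1; set c := T 1 0; set d := T 1 1.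
move=> [ha hb hc hd] nz vdt.
have e1 : d * a - c * b = a * d - b * c by ring.
have m1 : inM v (mk2 d c b a) by rewrite allge_mk2.
have m2 : \det (mk2 d c b a) != 0 by rewrite mk2_det e1.
have m3 : v (\det (mk2 d c b a)) = 1 by rewrite mk2_det e1.
have [U [hU H]] := lower_index_form m1 m2 m3.
exists (mk2 0 1 1 0 *m U *m mk2 0 1 1 0); split.
  by apply: (GL2o_mul hv); [apply: (GL2o_mul hv) GL2o_swap hU|exact: GL2o_swap].
have eT : mk2 a b c d = mk2 0 1 1 0 *m mk2 d c b a *m mk2 0 1 1 0.
  by rewrite !mk2_mul; congr mk2; ring.
case: H => [[al [hal e']]|e']; [left; exists al; split => //|right];
  rewrite eT e' -!mulmxA; congr (_ *m (_ *m _)); rewrite !mk2_mul; congr mk2; ring.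
Qed.

End Hermite.

Section Adj.
Variables (F : fieldType) (v : F -> int).
Hypothesis hv : is_discrete_valuation v.
Variable (varpi : F).
Hypotheses (hvarpi0 : varpi != 0) (hvarpi : v varpi = 1).
Local Notation V := (Vertex v).

Lemma class_scale (y : V) L c : proj1_sig y L -> c != 0 -> proj1_sig y (scale_set c L).
Proof.
move=> hL nc; have [B hB] := rep_exists y.
have [c1 nc1 ->] := (rep_class hB L).1 hL.
apply/(rep_class hB); exists (c * c1); first by rewrite mulf_neq0.
by rewrite lat_scale scalerA.
Qed.

Lemma strict_scale c (A B : vset F) : c != 0 -> subset_strict A B ->
  subset_strict (scale_set c A) (scale_set c B).
Proof.
move=> nc [h1 [x hx nx]]; split.
- by move=> y [z hz ->]; exists z => //; apply: h1.
- exists (c *: x); first by exists x.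
  move=> [z hz e]; apply: nx.
  have : z = x by rewrite -[z](scalerK nc) -e scalerK.
  by move=> <-.
Qed.

Lemma adj_sym (y z : V) : adj varpi y z -> adj varpi z y.
Proof.
move=> [L [L' [hL [hL' [s1 s2]]]]].
exists L', (scale_set varpi L); split => //; split; first exact: class_scale.
split => //; exact: strict_scale.
Qed.

Lemma strict_neq (A B : vset F) : subset_strict A B -> A <> B.
Proof. by move=> [_ [x hx nx]] e; apply: nx; rewrite e. Qed.

(* A strict chain  varpi lattice(X) < lattice(Y) < lattice(X)  forces the
   transition matrix Y X^-1 to be integral with determinant of valuation 1:
   the valuations of det(Y X^-1) and det(varpi X Y^-1) are >= 0, sum to 2, and
   neither can vanish, since an element of GL_2(o) would not change the lattice. *)
Lemma lattice_chain_transition (X Y : 'M[F]_2) : X \in unitmx -> Y \in unitmx ->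
  subset_strict (lattice_of v (varpi *: X)) (lattice_of v Y) ->
  subset_strict (lattice_of v Y) (lattice_of v X) ->
  [/\ inM v (Y *m invmx X), \det (Y *m invmx X) != 0 & v (\det (Y *m invmx X)) = 1].
Proof.
move=> uX uY s1 s2.
have uwX : varpi *: X \in unitmx by rewrite unitmxZ ?unitfE.
have hT : inM v (Y *m invmx X) by apply: (lat_sub_inM hv) => // x; case: s2 => h _; exact: h.
have hS : inM v (varpi *: X *m invmx Y) by apply: (lat_sub_inM hv) => // x; case: s1 => h _; exact: h.
set T := Y *m invmx X in hT *; set S := varpi *: X *m invmx Y in hS.
have eTS : T *m S = varpi *: 1%:M.
  by rewrite /T /S -scalemxAl -scalemxAr !mulmxA mulmxKV // mulmxV.
have nT : \det T != 0 by rewrite -unitfE -unitmxE unitmx_mul uY unitmx_inv.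
have nS : \det S != 0 by rewrite -unitfE -unitmxE unitmx_mul uwX unitmx_inv.
have vsum : v (\det T) + v (\det S) = 2.
  by rewrite -(vM hv) // -det_mulmx eTS detZ det1 mulr1 (v_varpiXn hv hvarpi0 hvarpi).
have gT := gv_le_v nT (det_ge hv hT); have gS := gv_le_v nS (det_ge hv hS).
have tT : v (\det T) != 0.
  apply/eqP => t0; apply: (strict_neq s2).
  have gl : GL2o v T by apply: (GL2o_of_det hv).
  have eTX : T *m X = Y by rewrite /T mulmxKV.
  by rewrite -eTX (lat_GL hv).
have tS : v (\det S) != 0.
  apply/eqP => s0; apply: (strict_neq s1).
  have gl : GL2o v S by apply: (GL2o_of_det hv).
  have eSY : S *m Y = varpi *: X by rewrite /S mulmxKV.
  by rewrite -eSY (lat_GL hv).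
split => //; move: gT gS vsum tT tS; rewrite !addr0; clear; lia.
Qed.

Lemma adj_transition (y z : V) B : adj varpi y z -> rep y B ->
  exists T, [/\ inM v T, \det T != 0, v (\det T) = 1 & rep z (T *m B)].
Proof.
move=> [L [L' [hL [hL' [s1 s2]]]]] hB; have [uB _] := hB.
have [c1 nc1 eL] := (rep_class hB L).1 hL.
have [Bz hBz] := rep_exists z; have [uBz _] := hBz.
have [c2 nc2 eL'] := (rep_class hBz L').1 hL'.
have uX : c1 *: B \in unitmx by rewrite unitmxZ ?unitfE.
have uY : c2 *: Bz \in unitmx by rewrite unitmxZ ?unitfE.
rewrite eL eL' lat_scale in s1; rewrite eL eL' in s2.
have [hT nT vT] := lattice_chain_transition uX uY s1 s2.
set T := _ *m invmx _ in hT nT vT.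
exists T; split => //.
have eTX : T *m (c1 *: B) = c2 *: Bz by rewrite /T mulmxKV.
have -> : T *m B = c1^-1 *: (c2 *: Bz) by rewrite -eTX -scalemxAr scalerA mulVf // scale1r.
by apply: (rep_scale hv); [apply: (rep_scale hv)|rewrite invr_neq0].
Qed.

(* The tree has no loops: [T B] <> [B] since v(det T) is odd. *)
Lemma adj_noloop (y : V) : ~ adj varpi y y.
Proof.
move=> h; have [B hB] := rep_exists y.
have [T [hT nT vT hTB]] := adj_transition h hB.
have [c [U [nc hU e]]] := rep_rel hv hB hTB.
have [uB _] := hB.
have eT : T = c *: U by rewrite -[T](mulmxK uB) e -scalemxAl mulmxK.
have [nU vU] := GL2o_det hv hU.
move: vT; rewrite eT detZ (vM hv) ?expf_neq0 // vU addr0 expr2 (vM hv) //.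
set z := v c; lia.
Qed.

Lemma strict_img M (A B : vset F) : M \in unitmx -> subset_strict A B ->
  subset_strict (img M A) (img M B).
Proof.
move=> uM [h1 [x hx nx]]; split.
- by move=> y [z hz ->]; exists z => //; apply: h1.
- exists (x *m M); first by exists x.
  move=> [z hz e]; apply: nx.
  have : z = x by rewrite -[z](mulmxK uM) -e mulmxK.
  by move=> <-.
Qed.

Lemma acts_as_adj M (y y' z z' : V) : M \in unitmx -> acts_as M y y' -> acts_as M z z' ->
  adj varpi y z -> adj varpi y' z'.
Proof.
move=> uM hy hz [L [L' [hL [hL' [s1 s2]]]]].
exists (img M L), (img M L'); split; first by apply/hy; exists L.
split; first by apply/hz; exists L'.
split; last exact: strict_img.
rewrite -img_scale; exact: strict_img.
Qed.

Lemma walk_map (f : V -> V) : (forall y z, adj varpi y z -> adj varpi (f y) (f z)) ->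
  forall y z n, walk varpi y z n -> walk varpi (f y) (f z) n.
Proof.
move=> hf y z n; elim => [u|a b c m hab _ ih]; first exact: walk0.
exact: walkS (hf _ _ hab) ih.
Qed.

Lemma walk_app (y z u : V) m n : walk varpi y z m -> walk varpi z u n -> walk varpi y u (m + n).
Proof.
elim => [a|a b c k hab _ ih] h //; rewrite addSn; exact: walkS hab (ih h).
Qed.

Lemma walk_rev (y z : V) n : walk varpi y z n -> walk varpi z y n.
Proof.
elim => [a|a b c k hab _ ih]; first exact: walk0.
have := walk_app ih (walkS (adj_sym hab) (walk0 varpi a)); by rewrite addn1.
Qed.

Lemma dist_le_trans (y z u : V) m n : dist_le varpi y z m -> dist_le varpi z u n -> dist_le varpi y u (m + n).
Proof.
move=> [m' hm hy] [n' hn hz]; exists (m' + n')%N; first exact: leq_add.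
exact: walk_app hy hz.
Qed.

Lemma dist_le_sym (y z : V) n : dist_le varpi y z n -> dist_le varpi z y n.
Proof. by move=> [k hk h]; exists k => //; exact: walk_rev. Qed.

Lemma dist_le_refl (y : V) n : dist_le varpi y y n.
Proof. by exists 0%N => //; exact: walk0. Qed.

Lemma dist_le_adj (y z : V) : adj varpi y z -> dist_le varpi y z 1.
Proof. by move=> h; exists 1%N => //; exact: walkS h (walk0 varpi z). Qed.

Lemma dist_le1 (y z : V) : dist_le varpi y z 1 -> y = z \/ adj varpi y z.
Proof.
move=> [k hk h]; case: k hk h => [|[|k]] // _ h.
- by inversion h; left.
- by inversion h as [|a b c m hab hw]; inversion hw; subst; right.
Qed.

(* Each step of a walk multiplies the transition matrix
   by some T with v(det T) = 1, so a walk of length n from [B] to [B'] gives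
   dist_bound (B' B^-1) n. *)
Definition dist_bound (C : 'M[F]_2) (n : nat) :=
  exists k : int, allge v C k /\ v (\det C) - (k + k) <= n%:Z.

Lemma walk_dist_bound (y z : V) n : walk varpi y z n -> forall B B', rep y B -> rep z B' ->
  dist_bound (B' *m invmx B) n.
Proof.
elim => [a|a b c m hab _ ih] B B' hB hB'.
- have [c [U [nc hU e]]] := rep_rel hv hB hB'.
  have [uB _] := hB.
  exists (v c); split.
  + rewrite e -scalemxAl mulmxK //; rewrite -[v c]addr0; apply: (allge_scale hv) (gv_v v c) _.
    by case: hU.
  + rewrite e -scalemxAl mulmxK // detZ (vM hv) ?expf_neq0 //; last by case: (GL2o_det hv hU).
    rewrite expr2 (vM hv) //; have [_ ->] := GL2o_det hv hU; set zz := v c; lia.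
- have [T [hT nT vT hTB]] := adj_transition hab hB.
  have [k [hk hd]] := ih _ _ hTB hB'.
  have [uB _] := hB; have [uB' _] := hB'.
  have uT : T \in unitmx by rewrite unitmxE unitfE.
  have e : B' *m invmx B = B' *m invmx (T *m B) *m T.
    by rewrite (invmxM uT uB) !mulmxA mulmxKV.
  exists k; split.
  + rewrite e -[k]addr0; exact: (allge_mul hv).
  + have uC : B' *m invmx (T *m B) \in unitmx by rewrite unitmx_mul uB' unitmx_inv unitmx_mul uT uB.
    have nC : \det (B' *m invmx (T *m B)) != 0 by rewrite -unitfE -unitmxE.
    rewrite e det_mulmx (vM hv) // vT.
    move: hd; set d := v _; lia.
Qed.

Lemma dist_le_bound (y z : V) n B B' : dist_le varpi y z n -> rep y B -> rep z B' -> dist_bound (B' *m invmx B) n.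
Proof.
move=> [m hm hwk] hB hB'; have [k [hk hd]] := walk_dist_bound hwk hB hB'.
exists k; split => //; apply: le_trans hd _; rewrite lez_nat; exact: hm.
Qed.

End Adj.

Section Apartment.
Variables (F : fieldType) (v : F -> int).
Hypothesis hv : is_discrete_valuation v.
Variable (varpi : F).
Hypotheses (hvarpi0 : varpi != 0) (hvarpi : v varpi = 1).
Local Notation V := (Vertex v).

Definition diagpi (j : int) : 'M[F]_2 := mk2 (varpi ^ j) 0 0 1.

Lemma varpiX_nz j : varpi ^ j != 0. Proof. exact: expfz_neq0. Qed.
#[local] Hint Resolve varpiX_nz : core.

Lemma diagpi_unit j : diagpi j \in unitmx.
Proof. by rewrite mk2_unit mulr1 mulr0 subr0. Qed.

Lemma diagpi0 : diagpi 0 = 1%:M. Proof. by rewrite /diagpi expr0z mk2_one. Qed.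

Lemma rep_GL2o (y : V) B U : rep y B -> GL2o v U -> rep y (U *m B).
Proof. by move=> hB hU; have := rep_GL hv hB (oner_neq0 F) hU; rewrite scale1r. Qed.

Lemma gv_mul_varpiX (a : F) (j : int) : ge_val v a 0 -> 0 <= j -> ge_val v (a * varpi ^ j) 0.
Proof.
move=> ha hj; rewrite -[(0:int)]addr0; apply: (gvM hv) => //.
apply: gv_le (gv_varpiX hv hvarpi0 hvarpi j) hj.
Qed.

Lemma diagpi_lower (a : F) (b j : int) :
  diagpi j *m mk2 1 0 (a * varpi ^ b) 1 = mk2 1 0 (a * varpi ^ (b - j)) 1 *m diagpi j.
Proof.
have e : varpi ^ b = varpi ^ (b - j) * varpi ^ j by rewrite -(varpiXD hvarpi0) subrK.
rewrite /diagpi !mk2_mul e; congr mk2; ring.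
Qed.

Lemma diagpi_upper (a : F) (b j : int) :
  diagpi j *m mk2 1 (a * varpi ^ b) 0 1 = mk2 1 (a * varpi ^ (b + j)) 0 1 *m diagpi j.
Proof.
rewrite /diagpi !mk2_mul (varpiXD hvarpi0); congr mk2; ring.
Qed.

Section Path.
Variable z : int -> V.
Hypothesis hz : is_biinf_path varpi z.

Definition fits (a b : int) (P : 'M[F]_2) :=
  forall j : int, - a <= j -> j <= b -> rep (z j) (diagpi j *m P).

(* A first fit on [0, 1], from the normal form of the transition matrix. *)
Lemma fits_init : exists P, fits 0 1 P.
Proof.
have [P0 h0] := rep_exists (z 0).
have hadj : adj varpi (z 0) (z 1) by have := hz.1 0; rewrite add0r.
have [T [hT nT vT hTB]] := adj_transition hv hvarpi0 hvarpi hadj h0.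
have [U [hU [[al [hal eT]]|eT]]] := lower_index_form hv hvarpi0 hvarpi hT nT vT.
- exists (mk2 1 0 al 1 *m P0) => j hj1 hj2.
  have [->|->] : j = 0 \/ j = 1 by lia.
  + by rewrite diagpi0 mul1mx; apply: rep_GL2o => //; exact: (GL2o_lower hv).
  + have e : diagpi 1 *m (mk2 1 0 al 1 *m P0) = invmx U *m (T *m P0).
      have uU : U \in unitmx by case: hU.
      rewrite eT -mulmxA mulKmx // mulmxA /diagpi expr1z mk2_mul; congr (_ *m _); congr mk2; ring.
    rewrite e; apply: rep_GL2o => //; exact: GL2o_inv.
- exists (mk2 0 1 1 0 *m P0) => j hj1 hj2.
  have [->|->] : j = 0 \/ j = 1 by lia.
  + by rewrite diagpi0 mul1mx; apply: rep_GL2o => //; exact: (GL2o_swap hv).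
  + have e : diagpi 1 *m (mk2 0 1 1 0 *m P0) = mk2 0 1 1 0 *m invmx U *m (T *m P0).
      have uU : U \in unitmx by case: hU.
      rewrite eT -!mulmxA mulKmx // !mulmxA /diagpi expr1z !mk2_mul.
      congr (_ *m _); congr mk2; ring.
    rewrite e; apply: rep_GL2o => //; apply: (GL2o_mul hv); [exact: (GL2o_swap hv) | exact: GL2o_inv].
Qed.

(* A fit extends one step to the right after a lower unipotent correction
   = 1 mod varpi^b (the alternative normal form would make the path backtrack) ... *)
Lemma fits_extend_up a b P : 0 <= a -> 1 <= b -> fits a b P ->
  exists al, ge_val v al 0 /\ fits a (b + 1) (mk2 1 0 (al * varpi ^ b) 1 *m P).
Proof.
move=> ha hb hI.
have hB := hI b ltac:(lia) (lexx _).
have hadj : adj varpi (z b) (z (b + 1)) := hz.1 b.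
have [T [hT nT vT hTB]] := adj_transition hv hvarpi0 hvarpi hadj hB.
have [U [hU [[al [hal eT]]|eT]]] := lower_index_form hv hvarpi0 hvarpi hT nT vT; have uU : U \in unitmx by case: hU.
- exists al; split => // j hj1 hj2.
  have [hj|->] : j <= b \/ j = b + 1 by lia.
  + rewrite mulmxA diagpi_lower -mulmxA; apply: rep_GL2o; first exact: hI.
    apply: (GL2o_lower hv); apply: gv_mul_varpiX => //; lia.
  + have e : diagpi (b + 1) *m (mk2 1 0 (al * varpi ^ b) 1 *m P) = invmx U *m (T *m (diagpi b *m P)).
      rewrite eT -mulmxA mulKmx // !mulmxA /diagpi (varpiXD hvarpi0) expr1z !mk2_mul.
      congr (_ *m _); congr mk2; ring.
    rewrite e; apply: rep_GL2o => //; exact: GL2o_inv.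
- exfalso; apply: (hz.2 b).
  have e : invmx U *m (T *m (diagpi b *m P)) = varpi *: (diagpi (b - 1) *m P).
    rewrite eT -mulmxA mulKmx // mulmxA scalemxAl /diagpi.
    have ew : varpi ^ b = varpi ^ (b - 1) * varpi by rewrite -[in LHS](subrK 1 b) (varpiXD hvarpi0) expr1z.
    rewrite mk2_mul mk2_scale ew; congr (_ *m _); congr mk2; ring.
  have h1 : rep (z (b + 1)) (varpi *: (diagpi (b - 1) *m P)) by rewrite -e; apply: rep_GL2o => //; exact: GL2o_inv.
  have h2 : rep (z (b + 1)) (diagpi (b - 1) *m P).
    have := rep_scale hv h1 (invr_neq0 hvarpi0); by rewrite scalerA mulVf // scale1r.
  exact: vert_eq h2 (hI (b - 1) ltac:(lia) ltac:(lia)).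
Qed.

Lemma fits_extend_down a b P : 0 <= a -> 1 <= b -> fits a b P ->
  exists be, ge_val v be 0 /\ fits (a + 1) b (mk2 1 (be * varpi ^ a) 0 1 *m P).
Proof.
move=> ha hb hI.
have hB := hI (- a) (lexx _) ltac:(lia).
have hadj : adj varpi (z (- a)) (z (- a - 1)).
  apply: adj_sym; have := hz.1 (- a - 1); by rewrite subrK.
have [T [hT nT vT hTB]] := adj_transition hv hvarpi0 hvarpi hadj hB.
have [U [hU [[be [hbe eT]]|eT]]] := upper_index_form hv hvarpi0 hvarpi hT nT vT; have uU : U \in unitmx by case: hU.
- exists be; split => // j hj1 hj2.
  have [hj|->] : - a <= j \/ j = - a - 1 by lia.
  + rewrite mulmxA diagpi_upper -mulmxA; apply: rep_GL2o; first exact: hI.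
    apply: (GL2o_upper hv) => //; apply: gv_mul_varpiX => //; lia.
  + have e : diagpi (- a - 1) *m (mk2 1 (be * varpi ^ a) 0 1 *m P) = varpi^-1 *: (invmx U *m (T *m (diagpi (- a) *m P))).
      rewrite eT -mulmxA mulKmx // !mulmxA scalemxAl /diagpi.
      have e1 : varpi ^ (- a) = varpi ^ (- a - 1) * varpi by rewrite -[in LHS](subrK 1 (- a)) (varpiXD hvarpi0) expr1z.
      have e2 : varpi ^ a = (varpi ^ (- a))^-1 by rewrite invr_expz opprK.
      have n1 : varpi ^ (- a - 1) != 0 by [].
      rewrite !mk2_mul mk2_scale e2 e1; congr (_ *m _); congr mk2; field_nz.
    rewrite e; apply: (rep_scale hv); last by rewrite invr_neq0.
    apply: rep_GL2o => //; exact: GL2o_inv.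
- exfalso; apply: (hz.2 (- a)).
  have e : invmx U *m (T *m (diagpi (- a) *m P)) = diagpi (- a + 1) *m P.
    rewrite eT -mulmxA mulKmx // mulmxA /diagpi (varpiXD hvarpi0) expr1z mk2_mul.
    congr (_ *m _); congr mk2; ring.
  have h1 : rep (z (- a - 1)) (diagpi (- a + 1) *m P) by rewrite -e; apply: rep_GL2o => //; exact: GL2o_inv.
  exact: vert_eq (hI (- a + 1) ltac:(lia) ltac:(lia)) h1.
Qed.

Lemma fits_extend (n : nat) P : fits n (n + 1) P ->
  exists P' M, [/\ fits (n + 1) (n + 2) P', P' = M *m P, GL2o v M & allge v (M - 1%:M) n].
Proof.
move=> hI.
have [al [hal hI1]] := fits_extend_up (ltac:(lia) : 0 <= n%:Z) (ltac:(lia) : 1 <= n%:Z + 1) hI.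
have [be [hbe hI2]] := fits_extend_down (ltac:(lia) : 0 <= n%:Z) (ltac:(lia) : 1 <= n%:Z + 1 + 1) hI1.
exists (mk2 1 (be * varpi ^ n) 0 1 *m (mk2 1 0 (al * varpi ^ (n%:Z + 1)) 1 *m P)).
exists (mk2 1 (be * varpi ^ n) 0 1 *m mk2 1 0 (al * varpi ^ (n%:Z + 1)) 1); split.
- have e : n%:Z + 1 + 1 = n%:Z + 2 by ring.
  by rewrite e in hI2.
- by rewrite mulmxA.
- apply: (GL2o_mul hv); [apply: (GL2o_upper hv) | apply: (GL2o_lower hv)]; apply: gv_mul_varpiX => //; lia.
- rewrite mk2_mul mk2_one mk2_opp mk2_add allge_mk2.
  have g1 : ge_val v (be * varpi ^ n) n by rewrite -[n%:Z]add0r; apply: (gvM hv) => //; exact: gv_varpiX.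
  have g2' : ge_val v (al * varpi ^ (n%:Z + 1)) (0 + (n%:Z + 1)) by apply: (gvM hv) => //; exact: gv_varpiX.
  have g2 : ge_val v (al * varpi ^ (n%:Z + 1)) n by apply: gv_le g2' _; lia.
  split; rewrite ?mulr1 ?mul1r ?mulr0 ?addr0 ?add0r ?subrr ?oppr0 ?addr0 //; try exact: gv0.
  rewrite addrC addKr; apply: gv_le; first exact: (gvM hv) g1 g2.
  lia.
Qed.

Lemma fits_sequence : exists Ps : nat -> 'M[F]_2,
  forall n : nat, [/\ fits n (n + 1) (Ps n),
    (exists2 U, GL2o v U & Ps n = U *m Ps 0%N) &
    (exists2 M, Ps n.+1 = M *m Ps n & allge v (M - 1%:M) n)].
Proof.
have [P0 h0] := fits_init.
have step : forall (n : nat) (P : 'M[F]_2), exists P', fits n (n + 1) P ->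
    exists M, [/\ fits (n + 1) (n + 2) P', P' = M *m P, GL2o v M & allge v (M - 1%:M) n].
  move=> n P; case: (classic (fits n (n + 1) P)) => h.
  - by have [P' [M hh]] := fits_extend h; exists P' => _; exists M.
  - by exists P => h'.
pose f n P := proj1_sig (constructive_indefinite_description _ (step n P)).
have hf (n : nat) (P : 'M[F]_2) : fits n (n + 1) P -> exists M,
    [/\ fits (n + 1) (n + 2) (f n P), f n P = M *m P, GL2o v M & allge v (M - 1%:M) n].
  exact: (proj2_sig (constructive_indefinite_description _ (step n P))).
pose Ps n := iteri n f P0.
have inv : forall n : nat, fits n (n + 1) (Ps n) /\ exists2 U, GL2o v U & Ps n = U *m P0.
  elim => [|n [ih [U hU eU]]].
  - by split => //; exists 1%:M; [exact: (GL2o_1 hv)|rewrite mul1mx].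
  - have [M [h1 h2 h3 h4]] := hf n (Ps n) ih.
    split.
    + have e : fits (n + 1)%N (n + 2)%N (Ps n.+1) := h1.
      by move: e; rewrite -[(n.+1 + 1)%R]/(n.+1 + 1)%N !addn1 addn2.
    + exists (M *m U); first exact: (GL2o_mul hv).
      by change (Ps n.+1) with (f n (Ps n)); rewrite h2 eU mulmxA.
exists Ps => n; have [ih hU] := inv n; split => //.
have [M [_ h2 _ h4]] := hf n (Ps n) ih.
by exists M => //; change (Ps n.+1) with (f n (Ps n)).
Qed.

End Path.

Lemma limit_entry (u : nat -> F) (K : int) : is_complete v ->
  (forall n d, ge_val v (u (n + d)%N - u n) (n%:Z + K)) ->
  exists l, forall k, exists N, forall n, (N <= n)%N -> ge_val v (u n - l) k.
Proof.
move=> hc hu; apply: hc => k.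
exists (absz (k - K)) => m n hm hn.
have gen : forall a b, (absz (k - K) <= a)%N -> (a <= b)%N -> ge_val v (u b - u a) k.
  move=> a b ha hab; have := hu a (b - a)%N; rewrite subnKC // => h.
  apply: gv_le h _; move: ha; lia.
case: (leqP n m) => h.
- exact: gen.
- rewrite -opprB; apply/(gvN hv); apply: gen => //; exact: ltnW.
Qed.

Lemma matrix_limit (Ps : nat -> 'M[F]_2) (K : int) : is_complete v ->
  (forall n d : nat, allge v (Ps (n + d)%N - Ps n) (n%:Z + K)) ->
  exists P, forall k, exists N, forall n, (N <= n)%N -> allge v (Ps n - P) k.
Proof.
move=> hc hP.
have ent i j : exists l, forall k, exists N, forall n, (N <= n)%N -> ge_val v (Ps n i j - l) k.
  apply: (limit_entry (K := K)) hc _ => n d.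
  by have := hP n d i j; rewrite !mxE.
have [l00 h00] := ent 0 0; have [l01 h01] := ent 0 1.
have [l10 h10] := ent 1 0; have [l11 h11] := ent 1 1.
exists (mk2 l00 l01 l10 l11) => k.
have [N1 g1] := h00 k; have [N2 g2] := h01 k.
have [N3 g3] := h10 k; have [N4 g4] := h11 k.
exists (maxn N1 (maxn N2 (maxn N3 N4))) => n hn; apply/allgeP.
rewrite !mxE /=; split; [apply: g1|apply: g2|apply: g3|apply: g4]; move: hn; lia.
Qed.

Lemma exists_allge (M : 'M[F]_2) : exists K, allge v M K.
Proof.
exists (Num.min (v (M 0 0)) (Num.min (v (M 0 1)) (Num.min (v (M 1 0)) (v (M 1 1))))).
apply/allgeP; split; [set x := M 0 0|set x := M 0 1|set x := M 1 0|set x := M 1 1];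
  (case: (eqVneq x 0) => [->|nx]; [exact: gv0| right]);
  rewrite ?ge_min ?lexx ?orbT //.
Qed.

Lemma allge0 k : allge v (0 : 'M[F]_2) k.
Proof. by move=> i j; rewrite mxE; exact: gv0. Qed.

Lemma diagpi_mul a b : diagpi a *m diagpi b = diagpi (a + b).
Proof. by rewrite /diagpi mk2_mul (varpiXD hvarpi0); congr mk2; ring. Qed.

Lemma diagpi_inv a : invmx (diagpi a) = diagpi (- a).
Proof.
have u := diagpi_unit a.
by rewrite -[invmx _]mulmx1 -diagpi0 -(subrr a) -diagpi_mul mulmxA mulVmx // mul1mx.
Qed.

Lemma conj_near_one_GL2o (j : int) (E : 'M[F]_2) : allge v E ((absz j)%:Z + 1) ->
  GL2o v (diagpi j *m (1%:M + E) *m diagpi (- j)).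
Proof.
have ej : varpi ^ (- j) = (varpi ^ j)^-1 by rewrite invr_expz.
rewrite [E]mk2E allgeP !mk2_00 !mk2_01 !mk2_10 !mk2_11.
set e00 := E 0 0; set e01 := E 0 1; set e10 := E 1 0; set e11 := E 1 1.
move=> [g00 g01 g10 g11].
have -> : diagpi j *m (1%:M + mk2 e00 e01 e10 e11) *m diagpi (- j) =
          mk2 (1 + e00) (varpi ^ j * e01) (varpi ^ (- j) * e10) (1 + e11).
  rewrite mk2_one mk2_add /diagpi !mk2_mul ej; congr mk2; field_nz.
have gJ x : ge_val v x ((absz j)%:Z + 1) -> ge_val v x 1 by move=> hx; apply: gv_le hx _; lia.
have ed : (1 + e00) * (1 + e11) - varpi ^ j * e01 * (varpi ^ (- j) * e10) =
          1 + (e00 + e11 + e00 * e11 - e01 * e10).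
  rewrite ej; field_nz.
have geps : ge_val v (e00 + e11 + e00 * e11 - e01 * e10) 1.
  apply: (gvB hv); [apply: (gvD hv); [apply: (gvD hv)|]|]; try exact: gJ.
  + apply: gv_le; first exact: (gvM hv) g00 g11. lia.
  + apply: gv_le; first exact: (gvM hv) g01 g10. lia.
have [n1 v1'] := v_one_plus hv geps.
apply: (GL2o_mk2 hv); rewrite ?ed //.
+ by apply: (gvD hv); [exact: (gv1 hv)| apply: gv_le g00 _; lia].
+ by apply: gv_le; [exact: (gvM hv) (gv_varpiX hv hvarpi0 hvarpi j) g01|lia].
+ by apply: gv_le; [exact: (gvM hv) (gv_varpiX hv hvarpi0 hvarpi (- j)) g10|lia].
+ by apply: (gvD hv); [exact: (gv1 hv)| apply: gv_le g11 _; lia].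
Qed.

(* P is the limit of the sequence of [fits_sequence], which converges since its
   consecutive terms differ by (M - 1) Ps n = 0 mod varpi^(n + K0). *)
Lemma apartment (z : int -> V) : is_biinf_path varpi z -> is_complete v ->
  exists P, P \in unitmx /\ forall j, rep (z j) (diagpi j *m P).
Proof.
move=> hz hc.
have [Ps hPs] := fits_sequence hz.
set P0 := Ps 0%N.
have uP0 : P0 \in unitmx.
  have [h0 _ _] := hPs 0%N.
  by have [] := h0 0 ltac:(lia) ltac:(lia); rewrite diagpi0 mul1mx.
have [K0 hK0] := exists_allge P0; have [K1 hK1] := exists_allge (invmx P0).
have diff (n : nat) : allge v (Ps n.+1 - Ps n) (n%:Z + K0).
  have [_ [U hU eU] [M eM hM]] := hPs n.
  have -> : Ps n.+1 - Ps n = (M - 1%:M) *m Ps n by rewrite mulmxBl mul1mx eM.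
  apply: (allge_mul hv) => //; rewrite eU -[K0]add0r; apply: (allge_mul hv) => //; by case: hU.
have tel (n d : nat) : allge v (Ps (n + d)%N - Ps n) (n%:Z + K0).
  elim: d => [|d ih]; first by rewrite addn0 subrr; exact: allge0.
  have -> : Ps (n + d.+1)%N - Ps n = (Ps (n + d).+1 - Ps (n + d)%N) + (Ps (n + d)%N - Ps n).
    by rewrite addnS addrA subrK.
  apply: (allge_add hv) => //; apply: allge_le (diff _) _; lia.
have [P conv] := matrix_limit hc tel.
have main j : rep (z j) (diagpi j *m P).
  have [N0 hN0] := conv ((absz j)%:Z + 1 - K1).
  set N := maxn N0 (absz j).
  have [hIN [U hU eU] _] := hPs N.
  have hzj : rep (z j) (diagpi j *m Ps N) by apply: hIN; rewrite /N; lia.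
  have uU : U \in unitmx by case: hU.
  have uPN : Ps N \in unitmx by rewrite eU unitmx_mul uU uP0.
  have hinv : allge v (invmx (Ps N)) K1.
    rewrite eU (invmxM uU uP0) -[K1]addr0; apply: (allge_mul hv) => //; by case: hU.
  pose E := (P - Ps N) *m invmx (Ps N).
  have hE : allge v E ((absz j)%:Z + 1).
    have -> : (absz j)%:Z + 1 = ((absz j)%:Z + 1 - K1) + K1 by rewrite subrK.
    apply: (allge_mul hv) => //.
    by rewrite -opprB; apply: (allge_opp hv); apply: hN0; exact: leq_maxl.
  have eP : P = (1%:M + E) *m Ps N by rewrite mulmxDl mul1mx /E mulmxKV // addrC subrK.
  have -> : diagpi j *m P = (diagpi j *m (1%:M + E) *m diagpi (- j)) *m (diagpi j *m Ps N).
    by rewrite eP !mulmxA -(mulmxA _ (diagpi (- j))) diagpi_mul addNr diagpi0 mulmx1.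
  by apply: rep_GL2o => //; exact: conj_near_one_GL2o.
exists P; split => //.
by have [] := main 0; rewrite diagpi0 mul1mx.
Qed.

Lemma gv_div_varpiX x k t : ge_val v (x * varpi ^ t) k -> ge_val v x (k - t).
Proof.
move=> h; have e : x = x * varpi ^ t * varpi ^ (- t) by rewrite -invr_expz mulfK.
rewrite e; apply: (gvM hv) h _; exact: (gv_varpiX hv hvarpi0 hvarpi).
Qed.

Lemma dist_bound_diagpi (W : 'M[F]_2) (t : int) n : W \in unitmx -> dist_bound v (W *m diagpi t) n ->
  exists k : int, [/\ ge_val v (W 0 0) (k - t), ge_val v (W 1 0) (k - t), ge_val v (W 0 1) k,
             ge_val v (W 1 1) k & v (\det W) + t - (k + k) <= n%:Z].
Proof.
move=> uW [k [hk hd]]; exists k.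
move: hk hd; rewrite [W]mk2E /diagpi mk2_mul allge_mk2 !mk2_00 !mk2_01 !mk2_10 !mk2_11.
rewrite !mulr0 !addr0 !add0r !mulr1 => -[h1 h2 h3 h4] hd.
split => //; try exact: gv_div_varpiX.
have nW : \det W != 0 by rewrite -unitfE -unitmxE.
move: hd; rewrite !mk2_det.
have -> : W 0 0 * varpi ^ t * W 1 1 - W 0 1 * (W 1 0 * varpi ^ t) = (W 0 0 * W 1 1 - W 0 1 * W 1 0) * varpi ^ t by ring.
move: nW; rewrite [W]mk2E mk2_det !mk2_00 !mk2_01 !mk2_10 !mk2_11 => nW.
by rewrite (vM hv) // (v_varpiX hv hvarpi0 hvarpi).
Qed.

Section Line.
Variable x : int -> V.
Variable P : 'M[F]_2.
Hypothesis uP : P \in unitmx.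
Hypothesis hP : forall j, rep (x j) (diagpi j *m P).

Lemma apt_dist_lower a b n : dist_le varpi (x a) (x b) n -> b - a <= n%:Z /\ a - b <= n%:Z.
Proof.
move=> h; have hD := dist_le_bound hv hvarpi0 hvarpi h (hP a) (hP b).
have e : diagpi b *m P *m invmx (diagpi a *m P) = diagpi b *m diagpi (- a).
  by rewrite (invmxM (diagpi_unit a) uP) mulmxA mulmxK // diagpi_inv.
rewrite e in hD; have [k [g1 g2 g3 g4 hd]] := dist_bound_diagpi (diagpi_unit b) hD.
move: g1 g4 hd; rewrite /diagpi !mk2_00 !mk2_11 mk2_det mulr1 mulr0 subr0 (v_varpiX hv hvarpi0 hvarpi).
move=> /(gv_le_v (varpiX_nz _)) ; rewrite (v_varpiX hv hvarpi0 hvarpi) => g1 /(gv_le_v (oner_neq0 _)); rewrite (v1 hv) => g4 hd.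
lia.
Qed.

Hypothesis hx : is_biinf_path varpi x.

Lemma apt_walk a (d : nat) : walk varpi (x a) (x (a + d%:Z)) d.
Proof.
elim: d => [|d ih]; first by rewrite addr0; exact: walk0.
have := walk_app ih (walkS (hx.1 (a + d%:Z)) (walk0 varpi _)).
have -> : a + (d.+1)%:Z = a + d%:Z + 1 by lia.
by rewrite addn1.
Qed.

Lemma apt_dist_upper a b : dist_le varpi (x a) (x b) (absz (b - a)).
Proof.
have [hab|hab] := lerP a b.
- exists (absz (b - a)) => //.
  by have := apt_walk a (absz (b - a)); have -> : a + (absz (b - a))%:Z = b by lia.
- apply: (dist_le_sym hvarpi0); exists (absz (a - b)); first by lia.
  by have := apt_walk b (absz (a - b)); have -> : b + (absz (a - b))%:Z = a by lia.
Qed.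

Lemma min_valuation (p r : F) : p != 0 \/ r != 0 ->
  exists A, [/\ ge_val v p A, ge_val v r A & forall k, ge_val v p k -> ge_val v r k -> k <= A].
Proof.
case: (eqVneq p 0) => [->|np] h.
- have nr : r != 0 by case: h => //; rewrite eqxx.
  exists (v r); split; [exact: gv0|exact: gv_v|by move=> k _ /(gv_le_v nr)].
- case: (eqVneq r 0) => [->|nr].
  + exists (v p); split; [exact: gv_v|exact: gv0|by move=> k /(gv_le_v np)].
  + exists (Num.min (v p) (v r)); split.
    * by right; rewrite ge_min lexx.
    * by right; rewrite ge_min lexx orbT.
    * by move=> k /(gv_le_v np) h1 /(gv_le_v nr) h2; rewrite le_min h1 h2.
Qed.

Definition col_vals (W : 'M[F]_2) (A B : int) : Prop :=
  [/\ ge_val v (W 0 0) A, ge_val v (W 1 0) A, ge_val v (W 0 1) B & ge_val v (W 1 1) B] /\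
  (forall k, ge_val v (W 0 0) k -> ge_val v (W 1 0) k -> k <= A) /\
  (forall k, ge_val v (W 0 1) k -> ge_val v (W 1 1) k -> k <= B).

Lemma col_vals_exist W : W \in unitmx -> exists A B, col_vals W A B.
Proof.
move=> uW; have nW : \det W != 0 by rewrite -unitfE -unitmxE.
have edW : \det W = W 0 0 * W 1 1 - W 0 1 * W 1 0 by rewrite {1}[W]mk2E mk2_det.
have npr : W 0 0 != 0 \/ W 1 0 != 0.
  case: (eqVneq (W 0 0) 0) => [p0|]; last by left.
  case: (eqVneq (W 1 0) 0) => [r0|]; last by right.
  by move: nW; rewrite edW p0 r0 !mul0r mulr0 subrr eqxx.
have nqs : W 0 1 != 0 \/ W 1 1 != 0.
  case: (eqVneq (W 0 1) 0) => [q0|]; last by left.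
  case: (eqVneq (W 1 1) 0) => [s0|]; last by right.
  by move: nW; rewrite edW q0 s0 !mul0r mulr0 subrr eqxx.
have [A [gpA grA mA]] := min_valuation npr.
have [B [gqB gsB mB]] := min_valuation nqs.
by exists A, B; repeat split.
Qed.

Lemma col_vals_det W A B : W \in unitmx -> col_vals W A B -> A + B <= v (\det W).
Proof.
move=> uW [[gp gr gq gs] _]; have nW : \det W != 0 by rewrite -unitfE -unitmxE.
apply: gv_le_v nW _; rewrite {1}[W]mk2E mk2_det.
by apply: (gvB hv); [exact: (gvM hv) | rewrite addrC; exact: (gvM hv)].
Qed.

Lemma dist_bound_col_vals W (A B t : int) n : W \in unitmx -> col_vals W A B ->
  dist_bound v (W *m diagpi (- t)) n ->
  v (\det W) - (A + A) + t <= n%:Z /\ v (\det W) - (B + B) - t <= n%:Z.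
Proof.
move=> uW [_ [mA mB]] hD.
have [k [e1 e2 e3 e4 e5]] := dist_bound_diagpi uW hD.
have i1 := mA _ e1 e2; have i2 := mB _ e3 e4.
by move: i1 i2 e5; rewrite opprK; clear; set d := v _; lia.
Qed.

(* When v(det W) = A + B, W is varpi^B times GL_2(o) times diag(varpi^(A - B), 1),
   so that [W P] is the point x_(A - B) of the path. *)
Lemma col_vals_rep W A B : col_vals W A B -> v (\det W) = A + B -> \det W != 0 ->
  exists2 U, GL2o v U & W = varpi ^ B *: (U *m diagpi (A - B)).
Proof.
move=> [[gp gr gq gs] _] hd nW.
set p := W 0 0 in gp *; set q := W 0 1 in gq *; set r := W 1 0 in gr *; set s := W 1 1 in gs *.
have edW : \det W = p * s - q * r by rewrite {1}[W]mk2E mk2_det.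
pose U := mk2 (p * varpi ^ (- A)) (q * varpi ^ (- B)) (r * varpi ^ (- A)) (s * varpi ^ (- B)).
have eU : p * varpi ^ (- A) * (s * varpi ^ (- B)) - q * varpi ^ (- B) * (r * varpi ^ (- A)) =
          \det W * (varpi ^ (- A) * varpi ^ (- B)) by rewrite edW; ring.
exists U.
  have g u k : ge_val v u k -> ge_val v (u * varpi ^ (- k)) 0.
    by move=> hu; have := gvM hv hu (gv_varpiX hv hvarpi0 hvarpi (- k)); rewrite subrr.
  apply: (GL2o_mk2 hv); rewrite ?eU ?mulf_neq0 //; try exact: g.
  rewrite (vM hv) ?mulf_neq0 // (vM hv) // !(v_varpiX hv hvarpi0 hvarpi) hd; lia.
rewrite {1}[W]mk2E /U /diagpi mk2_mul mk2_scale.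
have eA : varpi ^ (- A) = (varpi ^ A)^-1 by rewrite invr_expz.
have eB : varpi ^ (- B) = (varpi ^ B)^-1 by rewrite invr_expz.
have eAB : varpi ^ (A - B) = varpi ^ A * (varpi ^ B)^-1 by rewrite (varpiXD hvarpi0) invr_expz.
have nA := varpiX_nz A; have nB := varpiX_nz B.
by rewrite eA eB eAB; congr mk2; rewrite /p /q /r /s; field_nz.
Qed.

(* Moving the endpoints
   beyond A - B, the bounds above force v(det W) = A + B and c = A - B. *)
Lemma apt_geodesic a b c (y : V) : a <= c -> c <= b ->
  dist_le varpi (x a) y (absz (c - a)) -> dist_le varpi y (x b) (absz (b - c)) -> y = x c.
Proof.
move=> hac hcb h1 h2.
have [Bw hBw] := rep_exists y; have [uBw _] := hBw.
set W := Bw *m invmx P.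
have uW : W \in unitmx by rewrite unitmx_mul uBw unitmx_inv.
have eC t : Bw *m invmx (diagpi t *m P) = W *m diagpi (- t).
  by rewrite (invmxM (diagpi_unit t) uP) mulmxA diagpi_inv.
have [A [B hAB]] := col_vals_exist uW.
have hdA := col_vals_det uW hAB.
set a' := Num.min a (A - B); set b' := Num.max b (A - B).
have ha' : a' <= a /\ a' <= A - B by rewrite !ge_min !lexx ?orbT.
have hb' : b <= b' /\ A - B <= b' by rewrite !le_max !lexx ?orbT.
have d1 : dist_le varpi (x a') y (absz (c - a')).
  have := dist_le_trans (apt_dist_upper a' a) h1.
  by have -> : (absz (a - a') + absz (c - a))%N = absz (c - a') by lia.
have d2 : dist_le varpi (x b') y (absz (b' - c)).
  apply: (dist_le_sym hvarpi0); have := dist_le_trans h2 (apt_dist_upper b b').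
  by have -> : (absz (b - c) + absz (b' - b))%N = absz (b' - c) by lia.
have D1 := dist_le_bound hv hvarpi0 hvarpi d1 (hP a') hBw; rewrite eC in D1.
have D2 := dist_le_bound hv hvarpi0 hvarpi d2 (hP b') hBw; rewrite eC in D2.
have [i1 i2] := dist_bound_col_vals uW hAB D1.
have [j1 j2] := dist_bound_col_vals uW hAB D2.
have [hc hd] : c = A - B /\ v (\det W) = A + B.
  by move: ha' hb' hac hcb hdA i1 i2 j1 j2; clear; set d := v _; lia.
have nW : \det W != 0 by rewrite -unitfE -unitmxE.
have [U hU eW] := col_vals_rep hAB hd nW.
symmetry; apply: (vert_eq_GL2o hv (hP c)) (varpiX_nz B) hU.
by rewrite hc mulmxA scalemxAl -eW /W mulmxKV.
Qed.

End Line.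

End Apartment.

Section Ghat.
Variables (F : fieldType) (v : F -> int).
Hypothesis hv : is_discrete_valuation v.
Variable (varpi : F).
Hypotheses (hvarpi0 : varpi != 0) (hvarpi : v varpi = 1).
Variable e : nat.
Local Notation V := (Vertex v).

(* Automorphisms preserve adjacency (distance <= 1, and there are no loops). *)
Lemma aut_adj (g : V -> V) y z : isAut varpi g -> adj varpi y z -> adj varpi (g y) (g z).
Proof.
move=> [bg hg] h.
have := (hg y z 1%N).2 (dist_le_adj h).
case/dist_le1 => // eq.
have := bij_inj bg eq => ey; rewrite ey in h.
by case: (adj_noloop hv hvarpi0 hvarpi h).
Qed.

Lemma inGhat_id : inGhat varpi e (@id V).
Proof.
split; first by split; [by exists id|].
move=> y1 y2 _; exists 1%:M; first exact: unitmx1.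
move=> y _; exact: acts_as_1.
Qed.

Lemma ball_map (g : V -> V) y1 y2 y : isAut varpi g -> in_ball varpi y1 y2 e y -> in_ball varpi (g y1) (g y2) e (g y).
Proof. by move=> [_ hg] [h|h]; [left|right]; apply/hg. Qed.

Lemma inGhat_comp (g h : V -> V) : inGhat varpi e g -> inGhat varpi e h -> inGhat varpi e (g \o h).
Proof.
move=> [ag lg] [ah lh]; split.
- split; first by apply: bij_comp; [case: ag|case: ah].
  move=> y z n /=; rewrite (ag.2 (h y) (h z) n); exact: ah.2.
- move=> y1 y2 hadj.
  have [Mh uh hh] := lh _ _ hadj.
  have [Mg ug hg] := lg _ _ (aut_adj ah hadj).
  exists (Mh *m Mg); first by rewrite unitmx_mul uh ug.
  move=> y hy; apply: acts_as_comp (hh _ hy) (hg _ (ball_map ah hy)).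
Qed.

Lemma isAut_inv (g g' : V -> V) : isAut varpi g -> cancel g g' -> cancel g' g -> isAut varpi g'.
Proof.
move=> [bg hg] c1 c2; split; first by exists g.
by move=> y z n; rewrite -(hg (g' y) (g' z) n) !c2.
Qed.

Lemma inGhat_inv (g g' : V -> V) : inGhat varpi e g -> cancel g g' -> cancel g' g -> inGhat varpi e g'.
Proof.
move=> [ag lg] c1 c2.
have ag' := isAut_inv ag c1 c2.
split => // y1 y2 hadj.
have [M uM hM] := lg _ _ (aut_adj ag' hadj).
exists (invmx M); first by rewrite unitmx_inv.
move=> y hy; apply: acts_as_inv => //.
have := hM _ (ball_map ag' hy); by rewrite c2.
Qed.

Lemma act_cancel (M : 'M[F]_2) : M \in unitmx -> cancel (@act _ v M) (@act _ v (invmx M)).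
Proof.
move=> uM y.
have h1 := acts_as_inv uM (acts_as_act y uM).
have uM' : invmx M \in unitmx by rewrite unitmx_inv.
have h2 := acts_as_act (@act _ v M y) uM'.
by symmetry; exact: acts_as_uniq h1 h2.
Qed.

Lemma act_cancel' (M : 'M[F]_2) : M \in unitmx -> cancel (@act _ v (invmx M)) (@act _ v M).
Proof.
move=> uM; have uM' : invmx M \in unitmx by rewrite unitmx_inv.
by have := act_cancel uM'; rewrite invmxK.
Qed.

Lemma inGhat_act (M : 'M[F]_2) : M \in unitmx -> inGhat varpi e (@act _ v M).
Proof.
move=> uM.
have uM' : invmx M \in unitmx by rewrite unitmx_inv.
have adjM : forall (N : 'M[F]_2), N \in unitmx -> forall y z, adj varpi y z -> adj varpi (@act _ v N y) (@act _ v N z).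
  by move=> N uN y z h; apply: acts_as_adj uN (acts_as_act y uN) (acts_as_act z uN) h.
split.
- split; first by exists (@act _ v (invmx M)); [exact: act_cancel|exact: act_cancel'].
  move=> y z n; split.
  + move=> [k hk hwk]; exists k => //.
    have := @walk_map _ _ varpi (@act _ v (invmx M)) (adjM _ uM') _ _ _ hwk; by rewrite !act_cancel.
  + by move=> [k hk hwk]; exists k => //; exact: @walk_map _ _ varpi (@act _ v M) (adjM _ uM) _ _ _ hwk.
- move=> y1 y2 _; exists M => // y _; exact: acts_as_act.
Qed.

End Ghat.

Section Bruhat.
Variables (F : fieldType) (v : F -> int).
Hypothesis hv : is_discrete_valuation v.
Variable (varpi : F).
Hypotheses (hvarpi0 : varpi != 0) (hvarpi : v varpi = 1).
Variable e : nat.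
Local Notation V := (Vertex v).
Variable x : int -> V.
Hypothesis hx : is_biinf_path varpi x.
Variable P : 'M[F]_2.
Hypothesis uP : P \in unitmx.
Hypothesis hP : forall j, rep (x j) (diagpi varpi j *m P).

Lemma aut_apt_dist (g : V -> V) a b a' b' : isAut varpi g -> g (x a) = x a' -> g (x b) = x b' ->
  absz (b - a) = absz (b' - a').
Proof.
move=> [_ hg] ea eb.
have h1 := (hg (x a) (x b) _).2 (apt_dist_upper hvarpi0 hvarpi uP hx a b).
rewrite ea eb in h1; have := apt_dist_lower hv hvarpi0 hvarpi uP hP h1.
have h2 := apt_dist_upper hvarpi0 hvarpi uP hx a' b'; rewrite -ea -eb in h2.
have := apt_dist_lower hv hvarpi0 hvarpi uP hP ((hg _ _ _).1 h2).
lia.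
Qed.

Lemma aut_fixed_ray (g : V -> V) i k N : isAut varpi g -> g (x i) = x i ->
  (forall n, 0 <= n -> N <= n -> g (x n) = x (n + k)) ->
  k = 0 /\ forall n, 0 <= n -> N <= n -> g (x n) = x n.
Proof.
move=> ag hi hn.
set m := `|i| + `|N| + `|k| + 1.
have hm : g (x m) = x (m + k) by apply: hn; lia.
have := aut_apt_dist ag hi hm; move=> hd.
have k0 : k = 0 by move: hd; rewrite /m; lia.
split => // n h1 h2; rewrite hn // k0 addr0 //.
Qed.

Lemma inHhat_of (h : V -> V) : inGhat varpi e h -> (forall k, h (x k) = x k) -> inHhat varpi e x h.
Proof.
move=> g f; split => //; split; last by exists 0.
split => //; by exists 0, 0 => n _ _; rewrite addr0.
Qed.

Lemma inHhat_id : inHhat varpi e x id.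
Proof. by apply: inHhat_of => //; exact: inGhat_id. Qed.

Lemma inHhat_comp h1 h2 : inHhat varpi e x h1 -> inHhat varpi e x h2 -> inHhat varpi e x (h1 \o h2).
Proof.
move=> [[[g1 _] _] f1] [[[g2 _] _] f2].
by apply: inHhat_of => [|k /=]; [exact: inGhat_comp | rewrite f2 f1].
Qed.

(* The upper unipotent element u(t) = P^-1 ((1, t), (0, 1)) P of PGL_2(F):
   it maps x_j to [((1, t varpi^j), (0, 1)) diag(varpi^j, 1) P], hence fixes
   x_j as soon as v(t) + j >= 0, and lies in N^. *)
Definition unip (t : F) : V -> V := act (invmx P *m mk2 1 t 0 1 *m P).

Lemma unip_unit t : invmx P *m mk2 1 t 0 1 *m P \in unitmx.
Proof. by rewrite !unitmx_mul unitmx_inv uP mk2_unit mulr1 mulr0 subr0 oner_eq0. Qed.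

Lemma rep_unip t j : rep (unip t (x j)) (mk2 1 (t * varpi ^ j) 0 1 *m (diagpi varpi j *m P)).
Proof.
have := acts_as_rep (acts_as_act (x j) (unip_unit t)) (hP j) (unip_unit t).
have -> // : diagpi varpi j *m P *m (invmx P *m mk2 1 t 0 1 *m P) =
             mk2 1 (t * varpi ^ j) 0 1 *m (diagpi varpi j *m P).
rewrite !mulmxA mulmxK //; congr (_ *m _).
by have := diagpi_upper hvarpi0 t 0 j; rewrite expr0z mulr1 add0r.
Qed.

Lemma unip_fix t j : `|v t| <= j -> unip t (x j) = x j.
Proof.
move=> hj; symmetry; apply: (vert_eq_GL2o hv (hP j) (c := 1) (U := mk2 1 (t * varpi ^ j) 0 1)).
- by rewrite scale1r; exact: rep_unip.
- exact: oner_neq0.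
- apply: (GL2o_upper hv); case: (eqVneq t 0) => [->|nt]; first by rewrite mul0r; exact: gv0.
  by right; rewrite (vM hv nt (expfz_neq0 j hvarpi0)) (v_varpiX hv hvarpi0 hvarpi); lia.
Qed.

Lemma unip_Nhat t : inNhat varpi e x (unip t).
Proof.
split; last by exists `|v t|; apply: unip_fix.
split; first by apply: inGhat_act => //; exact: unip_unit.
by exists 0, `|v t| => m _ hm; rewrite addr0 unip_fix.
Qed.

Variable alpha : V -> V.
Hypothesis halpha : inGhat varpi e alpha.
Hypothesis halphax : forall n, alpha (x n) = x (- n).

Lemma Nhat_fixes_ray (n : V -> V) : inNhat varpi e x n -> exists N, forall m, 0 <= m -> N <= m -> n (x m) = x m.
Proof.
move=> [[[gn _] [k [N hN]]] [i hi]].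
have [_ h] := aut_fixed_ray gn hi hN; by exists N.
Qed.

(* If n1 alpha b1 = n2 alpha b2, then h = n2^-1 n1 lies in H^: h fixes a ray
   towards omega and satisfies h alpha b1 = alpha b2, hence maps a ray towards
   omega' by a translation, which must be trivial; h then fixes the far points
   on both sides, and by geodesic uniqueness every x_k. *)
Lemma coset_quotient_in_Hhat n1 n2 b1 b2 n2' : inNhat varpi e x n1 -> inNhat varpi e x n2 -> inBhat varpi e x b1 -> inBhat varpi e x b2 ->
  n1 \o alpha \o b1 = n2 \o alpha \o b2 -> cancel n2 n2' -> cancel n2' n2 -> inHhat varpi e x (n2' \o n1).
Proof.
move=> hn1 hn2 [gb1 [c1 [M1 hb1]]] [gb2 [c2 [M2 hb2]]] E k1 k2.
have [N1 f1] := Nhat_fixes_ray hn1; have [N2 f2] := Nhat_fixes_ray hn2.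
have gn1 := hn1.1.1; have gn2 := hn2.1.1.
have gh : inGhat varpi e (n2' \o n1) by apply: (inGhat_comp hv hvarpi0 hvarpi) => //; exact: (inGhat_inv hv hvarpi0 hvarpi) gn2 k1 k2.
have ah := gh.1.
have f2' : forall m, 0 <= m -> N2 <= m -> n2' (x m) = x m by move=> m h h'; rewrite -{1}(f2 m h h') k1.
have fh : forall m, 0 <= m -> N1 <= m -> N2 <= m -> (n2' \o n1) (x m) = x m.
  by move=> m h h' h''; rewrite /= f1 // f2'.
have key : forall y, (n2' \o n1) (alpha (b1 y)) = alpha (b2 y).
  by move=> y; have := congr1 (fun f => n2' (f y)) E; rewrite /= k1.
have kp : forall p, 0 <= p -> M1 <= p -> M2 <= p -> (n2' \o n1) (x (- (p + c1))) = x (- (p + c2)).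
  by move=> p h h' h''; have := key (x p); rewrite hb1 // hb2 // !halphax.
have [Bd hBd] : exists Bd : int, Bd = `|N1| + `|N2| + `|M1| + `|M2| + `|c1| + `|c2| + 1 by eexists.
have c12 : c1 = c2.
  have := aut_apt_dist ah (kp Bd ltac:(lia) ltac:(lia) ltac:(lia)) (fh Bd ltac:(lia) ltac:(lia) ltac:(lia)).
  lia.
apply: inHhat_of => // k.
have [Bk hBk] : exists Bk : int, Bk = Bd + `|k| by eexists.
have eA := kp Bk ltac:(lia) ltac:(lia) ltac:(lia); rewrite -c12 in eA.
have eB := fh Bk ltac:(lia) ltac:(lia) ltac:(lia).
apply: (apt_geodesic hv hvarpi0 hvarpi uP hP hx (a := - (Bk + c1)) (b := Bk)); try lia.
- rewrite -{1}eA; apply/(ah.2); exact: (apt_dist_upper hvarpi0 hvarpi uP hx).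
- rewrite -{1}eB; apply/(ah.2); exact: (apt_dist_upper hvarpi0 hvarpi uP hx).
Qed.

(* N^ alpha B^ and B^ are disjoint: an element n alpha b sends points far
   towards omega to points far towards omega', so it cannot fix omega. *)
Lemma bruhat_disjoint g : ~ ((exists n b, [/\ inNhat varpi e x n, inBhat varpi e x b & g = n \o alpha \o b]) /\ inBhat varpi e x g).
Proof.
move=> [[n [b [hn [gb [c [M hb]]] eg]]] [gg [k [N hg]]]].
have [N1 f1] := Nhat_fixes_ray hn.
have ag := hn.1.1.1.
have [m hm] : exists m : int, m = `|N| + `|N1| + `|M| + `|c| + `|k| + 1 by eexists.
have e1 := hg m ltac:(lia) ltac:(lia).
have e2 : g (x m) = n (x (- (m + c))) by rewrite eg /= hb ?halphax //; lia.
have e3 := f1 (m + k) ltac:(lia) ltac:(lia).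
have ex : x (- (m + c)) = x (m + k) by apply: (bij_inj ag.1); rewrite -e2 e1 e3.
have := apt_dist_lower hv hvarpi0 hvarpi uP hP (a := - (m + c)) (b := m + k) (n := 0%N).
rewrite ex => /(_ (dist_le_refl varpi _ 0%N)); lia.
Qed.

(* n1 alpha B^ meets n2 alpha B^ iff n1 H^ = n2 H^: one direction is
   [coset_quotient_in_Hhat]; conversely n1 = n2 h with h in H^ commuting with
   the path, and alpha^-1 h alpha is in B^. *)
Lemma bruhat_cosets n1 n2 : inNhat varpi e x n1 -> inNhat varpi e x n2 ->
     ((exists g, (exists2 b, inBhat varpi e x b & g = n1 \o alpha \o b) /\
                 (exists2 b, inBhat varpi e x b & g = n2 \o alpha \o b))
      <->
      (forall g, (exists2 h, inHhat varpi e x h & g = n1 \o h) <->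
                 (exists2 h, inHhat varpi e x h & g = n2 \o h))).
Proof.
move=> hn1 hn2.
have [al' ca1 ca2] := halpha.1.1.
have [n1' k11 k12] := hn1.1.1.1.1.
have [n2' k21 k22] := hn2.1.1.1.1.
split.
- move=> [g [[b1 hb1 e1] [b2 hb2 e2]]].
  have E : n1 \o alpha \o b1 = n2 \o alpha \o b2 by rewrite -e1 -e2.
  have H12 := coset_quotient_in_Hhat hn1 hn2 hb1 hb2 E k21 k22.
  have H21 := coset_quotient_in_Hhat hn2 hn1 hb2 hb1 (esym E) k11 k12.
  move=> g'; split.
  + move=> [h hh ->]; exists ((n2' \o n1) \o h); first exact: inHhat_comp.
    by apply: functional_extensionality => y /=; rewrite k22.
  + move=> [h hh ->]; exists ((n1' \o n2) \o h); first exact: inHhat_comp.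
    by apply: functional_extensionality => y /=; rewrite k12.
- move=> H.
  have [h hh eh] : exists2 h, inHhat varpi e x h & n1 = n2 \o h.
    by apply/H; exists id; [exact: inHhat_id|].
  exists (n1 \o alpha); split.
  + by exists id; first exact: inHhat_id.1.1.
  + exists (al' \o h \o alpha).
    * split.
      - apply: (inGhat_comp hv hvarpi0 hvarpi) => //; apply: (inGhat_comp hv hvarpi0 hvarpi).
        + exact: (inGhat_inv hv hvarpi0 hvarpi) halpha ca1 ca2.
        + exact: hh.1.1.1.
      - exists 0, 0 => m _ _ /=; rewrite halphax hh.2 -halphax ca1 addr0 //.
    * by apply: functional_extensionality => y /=; rewrite ca2 eh.
Qed.

(* If g(x_j) = [diag(varpi^j, 1) R P] with R upper triangular, then g shifts
   the path by v(a) - v(d) far towards omega, so g fixes omega. *)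
Lemma upper_fixes_end g Q a b d : (forall j, rep (g (x j)) (diagpi varpi j *m Q)) ->
  Q = mk2 a b 0 d *m P -> a * d != 0 -> fixes_end x g.
Proof.
move=> hQ eQ nad.
have na : a != 0 by move: nad; rewrite mulf_eq0 negb_or => /andP[].
have nd : d != 0 by move: nad; rewrite mulf_eq0 negb_or => /andP[].
exists (v a - v d), (`|v d| + `|v b|) => m h0 hN.
set s := v a - v d.
pose U := mk2 (varpi ^ m * a / (d * varpi ^ (m + s))) (varpi ^ m * b / d) 0 1.
have nm := expfz_neq0 m hvarpi0; have nms := expfz_neq0 (m + s) hvarpi0.
have eU : diagpi varpi m *m Q = d *: (U *m (diagpi varpi (m + s) *m P)).
  rewrite eQ mulmxA (mulmxA U) scalemxAl; congr (_ *m _).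
  have e1 : varpi ^ (m + s) = varpi ^ m * varpi ^ s by rewrite (varpiXD hvarpi0).
  have ns := expfz_neq0 s hvarpi0.
  rewrite /U /diagpi !mk2_mul mk2_scale e1; congr mk2; field_nz.
have v00 : v (varpi ^ m * a / (d * varpi ^ (m + s))) = 0.
  by rewrite (vdiv hv) ?mulf_neq0 // !(vM hv) // !(v_varpiX hv hvarpi0 hvarpi) /s; ring.
have hU : GL2o v U.
  apply: (GL2o_mk2 hv); try exact: gv0; try exact: (gv1 hv).
  - by right; rewrite v00.
  - case: (eqVneq b 0) => [->|nb]; first by rewrite mulr0 mul0r; exact: gv0.
    right; rewrite (vdiv hv) ?mulf_neq0 // (vM hv) // (v_varpiX hv hvarpi0 hvarpi).
    by move: hN; clear; lia.
  - by rewrite mulr1 mulr0 subr0 !mulf_neq0 ?invr_neq0 ?mulf_neq0.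
  - by rewrite mulr1 mulr0 subr0.
have := hQ m; rewrite eU => hr.
symmetry; exact: (vert_eq_GL2o hv (hP (m + s)) hr nd hU).
Qed.

(* If instead R = ((a, b), (c, d)) with c <> 0, then u(d/c) o alpha agrees with g
   far towards omega: u(d/c)(x_(-j)) = g(x_m) for j = m + v(det R) - 2 v(c). *)
Lemma unip_matches g Q a b c d : (forall j, rep (g (x j)) (diagpi varpi j *m Q)) ->
  Q = mk2 a b c d *m P -> c != 0 -> a * d - b * c != 0 ->
  forall m, `|v c| + `|v a| <= m ->
  unip (d / c) (x (- (m + (v (a * d - b * c) - (v c + v c))))) = g (x m).
Proof.
move=> hQ eQ nc ndl m hN.
set dl := a * d - b * c in ndl *; set t := d / c.
set j := m + (v dl - (v c + v c)).
pose U := mk2 (varpi ^ m * a / c) (- (varpi ^ m * dl / (c * c * varpi ^ j))) 1 0.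
have nm := expfz_neq0 m hvarpi0; have nj := expfz_neq0 j hvarpi0.
have ej : varpi ^ (- j) = (varpi ^ j)^-1 by rewrite invr_expz.
have eU : diagpi varpi m *m Q =
          (c * varpi ^ j) *: (U *m (mk2 1 (t * varpi ^ (- j)) 0 1 *m (diagpi varpi (- j) *m P))).
  rewrite eQ !mulmxA scalemxAl; congr (_ *m _).
  rewrite /U /diagpi /t /dl ej !mk2_mul mk2_scale; congr mk2; field_nz.
have vU01 : v (- (varpi ^ m * dl / (c * c * varpi ^ j))) = 0.
  rewrite (vN hv) (vdiv hv) ?mulf_neq0 // !(vM hv) ?mulf_neq0 //.
  by rewrite !(v_varpiX hv hvarpi0 hvarpi) /j; ring.
have nU01 : - (varpi ^ m * dl / (c * c * varpi ^ j)) != 0.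
  by rewrite oppr_eq0 !mulf_neq0 ?invr_neq0 ?mulf_neq0.
have hU : GL2o v U.
  apply: (GL2o_mk2 hv); try exact: gv0; try exact: (gv1 hv).
  - case: (eqVneq a 0) => [->|na]; first by rewrite mulr0 mul0r; exact: gv0.
    right; rewrite (vdiv hv) ?mulf_neq0 // (vM hv) // (v_varpiX hv hvarpi0 hvarpi).
    by move: hN; clear; lia.
  - by right; rewrite vU01.
  - by rewrite mulr0 mulr1 sub0r oppr_eq0.
  - by rewrite mulr0 mulr1 sub0r (vN hv).
have := hQ m; rewrite eU => hr.
exact: (vert_eq_GL2o hv (rep_unip t (- j)) hr (mulf_neq0 nc nj) hU).
Qed.

Hypothesis hc : is_complete v.

Lemma aut_biinf_path (g : V -> V) : isAut varpi g -> is_biinf_path varpi (g \o x).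
Proof.
move=> ag; split => n /=.
- exact: (aut_adj hv hvarpi0 hvarpi ag (hx.1 n)).
- by move=> eq; apply: (hx.2 n); exact: (bij_inj ag.1 eq).
Qed.

(* G^ = N^ alpha B^ u B^: write g(x_j) = [diag(varpi^j, 1) R P] using the
   apartment of g o x.  If R is upper triangular, g is in B^; otherwise
   n = u(d/c) is in N^ and alpha^-1 n^-1 g fixes omega by [unip_matches]. *)
Lemma bruhat_cover g : inGhat varpi e g <->
     ((exists n b, [/\ inNhat varpi e x n, inBhat varpi e x b & g = n \o alpha \o b])
      \/ inBhat varpi e x g).
Proof.
split; last first.
  case=> [[n [b [hn hb ->]]]|[]] //.
  apply: (inGhat_comp hv hvarpi0 hvarpi); last exact: hb.1.
  apply: (inGhat_comp hv hvarpi0 hvarpi) => //; exact: hn.1.1.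
move=> hg; case: (classic (inBhat varpi e x g)) => hB; [by right | left].
have [al' ca1 ca2] := halpha.1.1.
have [Q [uQ hQ]] := apartment hv hvarpi0 hvarpi (aut_biinf_path hg.1) hc.
set R := Q *m invmx P.
have eQ : Q = R *m P by rewrite /R mulmxKV.
have uR : R \in unitmx by rewrite unitmx_mul uQ unitmx_inv.
move: eQ uR; rewrite [R]mk2E; set a := R 0 0; set b := R 0 1; set c := R 1 0; set d := R 1 1.
clearbody a b c d => eQ uR; rewrite mk2_unit in uR.
case: (eqVneq c 0) => [c0|nc].
  exfalso; apply: hB; split => //; apply: (upper_fixes_end (a := a) (b := b) (d := d) hQ).
  - by rewrite eQ c0.
  - by move: uR; rewrite c0 mulr0 subr0.
have hn := unip_Nhat (d / c).
have [n' cn1 cn2] := hn.1.1.1.1.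
exists (unip (d / c)), (al' \o n' \o g); split => //.
- split.
  + apply: (inGhat_comp hv hvarpi0 hvarpi) => //; apply: (inGhat_comp hv hvarpi0 hvarpi).
    * exact: (inGhat_inv hv hvarpi0 hvarpi) halpha ca1 ca2.
    * exact: (inGhat_inv hv hvarpi0 hvarpi) hn.1.1 cn1 cn2.
  + exists (v (a * d - b * c) - (v c + v c)), (`|v c| + `|v a|) => m _ hm.
    by rewrite /= -(unip_matches hQ eQ nc uR hm) cn1 -halphax ca1.
- by apply: functional_extensionality => y /=; rewrite ca2 cn2.
Qed.

End Bruhat.

Unset Implicit Arguments.

Theorem mainTheorem11 (F : fieldType) (v : F -> int)
  (hF : is_nonarch_local_field v)
  (varpi : F) (hvarpi0 : varpi != 0) (hvarpi : v varpi = 1)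
  (e : nat) (he : (1 <= e)%N)
  (x : int -> Vertex v) (hx : is_biinf_path varpi x)
  (alpha : Vertex v -> Vertex v) (halpha : inGhat varpi e alpha)
  (halphax : forall n : int, alpha (x n) = x (- n)) :
  (* hat G = hat N alpha hat B  disjoint-union  hat B *)
  (forall g : Vertex v -> Vertex v,
     inGhat varpi e g <->
     ((exists n, exists b, [/\ inNhat varpi e x n, inBhat varpi e x b &
                               g = n \o alpha \o b])
      \/ inBhat varpi e x g)) /\
  (forall g : Vertex v -> Vertex v,
     ~ ((exists n, exists b, [/\ inNhat varpi e x n, inBhat varpi e x b &
                                g = n \o alpha \o b])
        /\ inBhat varpi e x g)) /\
  (* n1 alpha hat B meets n2 alpha hat B  iff  n1 hat H = n2 hat H *)
  (forall n1 n2 : Vertex v -> Vertex v,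
     inNhat varpi e x n1 -> inNhat varpi e x n2 ->
     ((exists g, (exists2 b, inBhat varpi e x b & g = n1 \o alpha \o b) /\
                 (exists2 b, inBhat varpi e x b & g = n2 \o alpha \o b))
      <->
      (forall g, (exists2 h, inHhat varpi e x h & g = n1 \o h) <->
                 (exists2 h, inHhat varpi e x h & g = n2 \o h)))).
Proof.
have [hv hc _] := hF.
have [P [uP hP]] := apartment hv hvarpi0 hvarpi hx hc.
split; [|split].
- move=> g; exact: (bruhat_cover hv hvarpi0 hvarpi hx uP hP halpha halphax hc g).
- move=> g; exact: (bruhat_disjoint hv hvarpi0 hvarpi hx uP hP halphax).
- move=> n1 n2 h1 h2; exact: (bruhat_cosets hv hvarpi0 hvarpi hx uP hP halpha halphax h1 h2).
Qed.
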